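(* Let $\alpha_1,\alpha_2>0$ satisfy $\alpha_1-\alpha_2\ge \sqrt{2}\,e$. Let $p$ be analytic in $\mathbb{D}$ with $p(0)=1$. If $$1+\alpha_1 zp'(z)+\alpha_2 z^2p''(z)\prec z+\sqrt{1+z^2},$$ then $p(z)\prec e^z$.
   Context: $\mathbb{D}$ is the open unit disk. For $g,h$ analytic in $\mathbb{D}$, $g\prec h$ means there is an analytic $w:\mathbb{D}\to\mathbb{D}$ with $w(0)=0$ and $g=h\circ w$. $\sqrt{1+z^2}$ is the branch analytic in $\mathbb{D}$ with value $1$ at $0$. *)

From Stdlib Require Import Reals.
From Coquelicot Require Import Coquelicot.
Open Scope C_scope.

Definition in_disk (z : C) : Prop := (Cmod z < 1)%R.

Definition cderiv (f : C -> C) (z : C) (l : C) : Prop :=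
  @is_derive C_AbsRing C_NormedModule f z l.

Definition analytic_on_disk (f : C -> C) : Prop :=
  forall z, in_disk z -> @ex_derive C_AbsRing C_NormedModule f z.

Definition subord (g h : C -> C) : Prop :=
  exists w : C -> C,
    analytic_on_disk w /\ w 0 = 0 /\
    (forall z, in_disk z -> in_disk (w z)) /\
    (forall z, in_disk z -> g z = h (w z)).

Definition Cexp (z : C) : C :=
  RtoC (exp (Re z)) * (cos (Im z), sin (Im z)).

(* principal square root: for Re w > 0 (in particular w = 1 + z^2 with |z| < 1)
   this is the analytic branch taking value 1 at w = 1 *)
Definition Csqrt (w : C) : C :=
  (sqrt ((Cmod w + Re w) / 2),
   (if Rle_dec 0 (Im w) then 1 else -1) * sqrt ((Cmod w - Re w) / 2))%R.

(* Let [w = Log p], defined as long as [p] stays in [exp(D)].  If [p] is not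
   subordinate to [e^z], there is a largest closed disk [|z| <= r0] on which
   [|w| <= 1], and [|w(z0)| = 1] at some [|z0| = r0].  Jack's lemma -- the
   first- and second-order conditions for the maximum of [|w|^2] along the
   circle, together with the Schwarz lemma along the radius -- gives
   [z0 w'(z0) = m w(z0)] with [m >= 1] and [Re (z0^2 w''(z0) / w(z0)) >= m (m - 1)].
   Since [p = e^w], the left-hand side of the subordination minus [1] equals
   [e^w (alpha1 z0 w' + alpha2 z0^2 w'' + alpha2 (z0 w')^2)] at [z0], of modulus at
   least [e^(-1) (alpha1 - alpha2) >= sqrt 2]; but [z + sqrt (1 + z^2) - 1] has
   modulus less than [sqrt 2] on the disk.  The Schwarz lemma itself comes from a
   maximum principle: [|g|^2 + eps |z - q|^2] is subharmonic, so it attains its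
   maximum over a closed disk on the boundary. *)

From Stdlib Require Import Reals Lra Psatz ClassicalEpsilon Classical_Prop.
From Coquelicot Require Import Coquelicot.
Open Scope C_scope.

Lemma im_le_Cmod (z : C) : (Rabs (Im z) <= Cmod z)%R.
Proof. eapply Rle_trans; [apply Rmax_r | apply (Rmax_Cmod z)]. Qed.

Lemma Cmod_le_Re_Im (z : C) : (Cmod z <= Rabs (Re z) + Rabs (Im z))%R.
Proof.
destruct z as [a b]. unfold Cmod, Re, Im; simpl.
pose proof (Rabs_pos a); pose proof (Rabs_pos b).
rewrite <- (sqrt_Rsqr (Rabs a + Rabs b)) by lra.
apply sqrt_le_1_alt. unfold Rsqr.
assert (Ea : (a * a = Rabs a * Rabs a)%R) by (rewrite <- Rabs_mult; symmetry; apply Rabs_right; nra).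
assert (Eb : (b * b = Rabs b * Rabs b)%R) by (rewrite <- Rabs_mult; symmetry; apply Rabs_right; nra).
nra.
Qed.

Lemma Cmod_triangle_inv (y u : C) : (Rabs (Cmod y - Cmod u) <= Cmod (y - u))%R.
Proof. exact (@norm_triangle_inv C_AbsRing C_NormedModule y u). Qed.

Lemma derivable_pt_lim_eps f x l : derivable_pt_lim f x l <->
  forall eps, (0 < eps)%R -> exists delta, (0 < delta)%R /\ forall h, (Rabs h < delta ->
    Rabs (f (x + h) - f x - h * l) <= eps * Rabs h)%R.
Proof.
split.
- intros H eps Heps. destruct (H eps Heps) as [d Hd].
  exists d. split. apply cond_pos. intros h Hh.
  destruct (Req_dec h 0) as [->|Hn].
  + rewrite Rplus_0_r, Rabs_R0. replace (f x - f x - 0 * l)%R with 0%R by ring. rewrite Rabs_R0. lra.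
  + specialize (Hd h Hn Hh).
    replace (f (x + h) - f x - h * l)%R with (h * ((f (x + h) - f x) / h - l))%R by (field; auto).
    rewrite Rabs_mult, Rmult_comm. apply Rmult_le_compat_r. apply Rabs_pos. lra.
- intros H eps Heps. destruct (H (eps/2)%R ltac:(lra)) as [d [Hd Hh]].
  exists (mkposreal d Hd). intros h Hn Hlt. simpl in Hlt.
  specialize (Hh h Hlt). pose proof (Rabs_pos_lt h Hn).
  replace ((f (x + h) - f x) / h - l)%R with ((f (x + h) - f x - h * l) / h)%R by (field; auto).
  unfold Rdiv. rewrite Rabs_mult, Rabs_inv.
  apply Rle_lt_trans with (eps/2)%R; [|lra].
  apply Rmult_le_reg_r with (Rabs h); [lra|].
  rewrite Rmult_assoc, Rinv_l by lra. nra.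
Qed.

Lemma is_derive_C_eps (N : NormedModule C_AbsRing) (f : C -> N) x l :
  is_derive f x l <->
  (forall eps : posreal, exists delta : posreal, forall y,
     (Cmod (y - x) < delta -> norm (minus (minus (f y) (f x)) (scal (y - x)%C l)) <= eps * Cmod (y - x))%R).
Proof.
split.
- intros [_ H] eps.
  specialize (H x (fun P HP => HP) eps).
  apply (@locally_le_locally_norm _ (AbsRing_NormedModule C_AbsRing)) in H.
  destruct H as [d Hd]. exists d. intros y Hy. exact (Hd y Hy).
- intros H. split.
  + apply is_linear_scal_l.
  + intros x' Hx'.
    assert (x' = x) by (symmetry; apply is_filter_lim_locally_unique; exact Hx').
    subst x'. intros eps. apply (@locally_norm_le_locally _ (AbsRing_NormedModule C_AbsRing)).
    destruct (H eps) as [d Hd]. exists d. intros y Hy. exact (Hd y Hy).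
Qed.

Lemma cderiv_eps f x l : cderiv f x l <->
  (forall eps : posreal, exists delta : posreal, forall y,
     (Cmod (y - x) < delta -> Cmod (f y - f x - (y - x) * l) <= eps * Cmod (y - x))%R).
Proof. exact (is_derive_C_eps C_NormedModule f x l). Qed.

(* Coquelicot's product and identity rules need [C] as a normed module over
   itself, whose uniform structure (balls for [Cmod]) is not the product one of
   [C_NormedModule] used by [cderiv]; the two derivatives coincide. *)
Lemma cderiv_is_derive f x l :
  cderiv f x l <-> @is_derive C_AbsRing (AbsRing_NormedModule C_AbsRing) f x l.
Proof. rewrite cderiv_eps, is_derive_C_eps. reflexivity. Qed.

Lemma cderiv_plus f g x a b :
  cderiv f x a -> cderiv g x b -> cderiv (fun z => f z + g z) x (a + b).
Proof. exact (is_derive_plus f g x a b). Qed.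

Lemma cderiv_mult f g x a b : cderiv f x a -> cderiv g x b ->
  cderiv (fun z => f z * g z) x (a * g x + f x * b).
Proof. rewrite !cderiv_is_derive. intros Ha Hb. exact (is_derive_mult f g x a b Ha Hb Cmult_comm). Qed.

Lemma cderiv_const (c : C) x : cderiv (fun _ => c) x 0.
Proof. exact (is_derive_const c x). Qed.

Lemma cderiv_id x : cderiv (fun z => z) x 1.
Proof. rewrite cderiv_is_derive. exact (is_derive_id x). Qed.

Lemma cderiv_comp f g x a b :
  cderiv f (g x) a -> cderiv g x b -> cderiv (fun z => f (g z)) x (b * a).
Proof. rewrite (cderiv_is_derive g). exact (is_derive_comp f g x a b). Qed.

Lemma cderiv_ext f g x l : (forall z, f z = g z) -> cderiv f x l -> cderiv g x l.
Proof. exact (is_derive_ext f g x l). Qed.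

Lemma cderiv_eq f x l l' : l = l' -> cderiv f x l -> cderiv f x l'.
Proof. intros ->; auto. Qed.

Lemma cderiv_scal (k : C) f x a : cderiv f x a -> cderiv (fun z => k * f z) x (k * a).
Proof. intros Ha. apply cderiv_eq with (0 * f x + k * a). ring. apply cderiv_mult; auto. apply cderiv_const. Qed.

Lemma cderiv_minus f g x a b :
  cderiv f x a -> cderiv g x b -> cderiv (fun z => f z - g z) x (a - b).
Proof.
intros Ha Hb. apply cderiv_ext with (fun z => f z + (-1) * g z). intros; ring.
apply cderiv_eq with (a + (-1) * b). ring.
apply cderiv_plus; auto. apply cderiv_scal; auto.
Qed.

Lemma cderiv_local f g x l :
  (exists delta, (0 < delta)%R /\ forall y, (Cmod (y - x) < delta)%R -> f y = g y) ->
  cderiv f x l -> cderiv g x l.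
Proof.
intros [d [Hd E]]. rewrite !cderiv_eps. intros H eps.
destruct (H eps) as [d1 Hd1].
assert (Hp : (0 < Rmin d d1)%R) by (apply Rmin_pos; [lra|apply cond_pos]).
assert (Ex : f x = g x) by (apply E; replace (x - x) with (RtoC 0) by ring; rewrite Cmod_0; lra).
exists (mkposreal _ Hp). simpl. intros y Hy.
rewrite <- Ex, <- E. apply Hd1. eapply Rlt_le_trans; [exact Hy|apply Rmin_r].
eapply Rlt_le_trans; [exact Hy|apply Rmin_l].
Qed.

Lemma cderiv_continuous f x l : cderiv f x l ->
  forall eps, (0 < eps)%R -> exists delta, (0 < delta)%R /\
    forall y, (Cmod (y - x) < delta -> Cmod (f y - f x) < eps)%R.
Proof.
rewrite cderiv_eps. intros H eps Heps.
destruct (H (mkposreal 1 Rlt_0_1)) as [d Hd]. simpl in Hd.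
pose proof (Cmod_ge_0 l).
set (delta := Rmin d (eps / (Cmod l + 2))).
assert (Hp : (0 < delta)%R) by (apply Rmin_pos; [apply cond_pos | apply Rdiv_lt_0_compat; lra]).
exists delta. split; auto. intros y Hy.
assert (H1 : (Cmod (y - x) < d)%R) by (eapply Rlt_le_trans; [exact Hy| apply Rmin_l]).
assert (H2 : (Cmod (y - x) * (Cmod l + 2) < eps)%R).
{ apply Rlt_le_trans with (delta * (Cmod l + 2))%R. apply Rmult_lt_compat_r; lra.
  unfold delta. replace eps with (eps / (Cmod l + 2) * (Cmod l + 2))%R at 2 by (field; lra).
  apply Rmult_le_compat_r. lra. apply Rmin_r. }
specialize (Hd y H1).
replace (f y - f x) with ((f y - f x - (y - x) * l) + (y - x) * l) by ring.
eapply Rle_lt_trans. apply Cmod_triangle. rewrite Cmod_mult.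
pose proof (Cmod_ge_0 (y - x)). nra.
Qed.

Lemma cderiv_inv (u : C) : u <> 0 -> cderiv (fun z => / z) u (- / (u * u)).
Proof.
intros Hu. apply cderiv_eps. intros eps.
assert (Hm : (0 < Cmod u)%R) by (apply Cmod_gt_0; auto).
set (m := Cmod u) in *.
assert (Hp : ((0 < Rmin (m/2) (eps * m * m * m / 2))%R)).
{ pose proof (cond_pos eps). apply Rmin_pos. lra. apply Rmult_lt_0_compat. repeat apply Rmult_lt_0_compat; lra. lra. }
exists (mkposreal _ Hp). simpl. intros y Hy.
assert (H1 : (Cmod (y - u) < m/2)%R) by (eapply Rlt_le_trans; [exact Hy| apply Rmin_l]).
assert (H2 : (Cmod (y - u) < eps * m * m * m / 2)%R) by (eapply Rlt_le_trans; [exact Hy| apply Rmin_r]).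
assert (Hy0 : ((m / 2 <= Cmod y)%R)).
{ pose proof (Cmod_triangle_inv y u). apply Rabs_le_between' in H. fold m in H. lra. }
assert (Hyn : y <> 0). { intro E; subst y. rewrite Cmod_0 in Hy0. lra. }
replace (/ y - / u - (y - u) * - / (u * u)) with ((y - u) * (y - u) / (u * u * y)) by (field; auto).
rewrite Cmod_div by (repeat apply Cmult_neq_0; auto). rewrite !Cmod_mult. fold m.
pose proof (Cmod_ge_0 (y - u)). pose proof (cond_pos eps).
apply Rmult_le_reg_r with (m * m * Cmod y)%R. { apply Rmult_lt_0_compat; nra. }
unfold Rdiv. rewrite Rmult_assoc, Rinv_l by (apply Rgt_not_eq; apply Rmult_lt_0_compat; nra).
assert (eps * Cmod (y - u) * (m * m * Cmod y) >= eps * Cmod (y-u) * (m*m*(m/2)))%R.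
{ apply Rle_ge. apply Rmult_le_compat_l. nra. apply Rmult_le_compat_l; nra. }
nra.
Qed.

Lemma Cexp_pair a b : Cexp (a, b) = (exp a * cos b, exp a * sin b)%R.
Proof. unfold Cexp, Cmult, RtoC; simpl. f_equal; ring. Qed.

Lemma Cexp_plus z w : Cexp (z + w) = Cexp z * Cexp w.
Proof.
destruct z as [a b], w as [c d]. unfold Cplus; simpl. rewrite !Cexp_pair.
unfold Cmult; simpl. rewrite exp_plus, cos_plus, sin_plus. f_equal; ring.
Qed.

Lemma Cmod_Cexp z : Cmod (Cexp z) = exp (Re z).
Proof.
destruct z as [a b]. rewrite Cexp_pair. unfold Cmod; simpl.
replace (exp a * cos b * (exp a * cos b * 1) + exp a * sin b * (exp a * sin b * 1))%R
  with (Rsqr (exp a) * (Rsqr (sin b) + Rsqr (cos b)))%R by (unfold Rsqr; ring).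
rewrite sin2_cos2, Rmult_1_r. apply sqrt_Rsqr. left; apply exp_pos.
Qed.

Lemma Cexp_remainder_bound (a b e : R) : (0 <= e <= 1/8)%R -> (Rabs a <= e)%R ->
  (Rabs (exp a - 1 - a) <= e * Rabs a)%R -> (Rabs (cos b - 1) <= e * Rabs b)%R ->
  (Rabs (sin b - b) <= e * Rabs b)%R ->
  (Cmod (Cexp (a, b) - 1 - (a, b)) <= 8 * e * Cmod (a, b))%R.
Proof.
intros He Hae H1 H2 H3.
pose proof (re_le_Cmod (a, b)) as Ha. pose proof (im_le_Cmod (a, b)) as Hb. simpl in Ha, Hb.
rewrite Cexp_pair.
eapply Rle_trans. apply Cmod_le_Re_Im. unfold Re, Im; simpl.
set (M := Cmod (a, b)) in *.
replace (exp a * cos b + - (1) + - a)%R with ((exp a - 1 - a) * cos b + (1 + a) * (cos b - 1))%R by ring.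
replace (exp a * sin b + - 0 + - b)%R with ((exp a - 1 - a + a) * sin b + (sin b - b))%R by ring.
pose proof (COS_bound b). pose proof (SIN_bound b).
pose proof (Rabs_pos a). pose proof (Rabs_pos b).
assert (Hc : (Rabs (cos b) <= 1)%R) by (apply Rabs_le; lra).
assert (Hs : (Rabs (sin b) <= 2 * Rabs b)%R).
{ replace (sin b) with ((sin b - b) + b)%R by ring. eapply Rle_trans. apply Rabs_triang. nra. }
assert (Ta : (Rabs ((exp a - 1 - a) * cos b) <= e * M)%R).
{ rewrite Rabs_mult. pose proof (Rabs_pos (exp a - 1 - a)). pose proof (Rabs_pos (cos b)). nra. }
assert (Tb : (Rabs ((1 + a) * (cos b - 1)) <= 2 * e * M)%R).
{ rewrite Rabs_mult. pose proof (Rabs_pos (cos b - 1)).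
  assert (Rabs (1 + a) <= 2)%R by (eapply Rle_trans; [apply Rabs_triang|]; rewrite Rabs_R1; lra).
  pose proof (Rabs_pos (1 + a)). nra. }
assert (Tc : (Rabs ((exp a - 1 - a + a) * sin b) <= 4 * e * M)%R).
{ rewrite Rabs_mult.
  assert (Rabs (exp a - 1 - a + a) <= 2 * Rabs a)%R by (eapply Rle_trans; [apply Rabs_triang|]; nra).
  pose proof (Rabs_pos (sin b)). pose proof (Rabs_pos (exp a - 1 - a + a)).
  apply Rle_trans with ((2 * Rabs a) * (2 * Rabs b))%R. apply Rmult_le_compat; lra.
  nra. }
pose proof (Rabs_triang ((exp a - 1 - a) * cos b) ((1 + a) * (cos b - 1))).
pose proof (Rabs_triang ((exp a - 1 - a + a) * sin b) (sin b - b)).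
nra.
Qed.

Lemma Cexp_first_order eps : (0 < eps)%R -> exists delta, (0 < delta)%R /\
  forall h, (Cmod h < delta -> Cmod (Cexp h - 1 - h) <= eps * Cmod h)%R.
Proof.
intros Heps.
set (e := (Rmin eps 1 / 8)%R).
assert (He : (0 < e)%R) by (unfold e; pose proof (Rmin_pos eps 1 Heps Rlt_0_1); lra).
assert (He1 : (e <= 1/8)%R) by (unfold e; pose proof (Rmin_r eps 1); lra).
assert (He2 : (8 * e <= eps)%R) by (unfold e; pose proof (Rmin_l eps 1); lra).
clearbody e.
assert (Dc : derivable_pt_lim cos 0 0)
  by (pose proof (derivable_pt_lim_cos 0) as D; rewrite sin_0, Ropp_0 in D; exact D).
assert (Ds : derivable_pt_lim sin 0 1)
  by (pose proof (derivable_pt_lim_sin 0) as D; rewrite cos_0 in D; exact D).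
destruct (proj1 (derivable_pt_lim_eps exp 0 1) derivable_pt_lim_exp_0 e He) as [d1 [Hd1 H1]].
destruct (proj1 (derivable_pt_lim_eps cos 0 0) Dc e He) as [d2 [Hd2 H2]].
destruct (proj1 (derivable_pt_lim_eps sin 0 1) Ds e He) as [d3 [Hd3 H3]].
set (d := Rmin (Rmin d1 d2) (Rmin d3 e)).
exists d. split. { unfold d; repeat apply Rmin_pos; lra. }
assert (Hd : (d <= d1 /\ d <= d2 /\ d <= d3 /\ d <= e)%R).
{ unfold d. pose proof (Rmin_l (Rmin d1 d2) (Rmin d3 e)). pose proof (Rmin_r (Rmin d1 d2) (Rmin d3 e)).
  pose proof (Rmin_l d1 d2). pose proof (Rmin_r d1 d2). pose proof (Rmin_l d3 e). pose proof (Rmin_r d3 e).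
  lra. }
intros [a b] Hh.
pose proof (re_le_Cmod (a, b)) as Ha. pose proof (im_le_Cmod (a, b)) as Hb. simpl in Ha, Hb.
specialize (H1 a ltac:(lra)). specialize (H2 b ltac:(lra)). specialize (H3 b ltac:(lra)).
rewrite Rplus_0_l, exp_0, Rmult_1_r in H1. rewrite Rplus_0_l, cos_0, Rmult_0_r, Rminus_0_r in H2.
rewrite Rplus_0_l, sin_0, Rmult_1_r, Rminus_0_r in H3.
eapply Rle_trans. apply (Cexp_remainder_bound a b e); auto; lra.
apply Rmult_le_compat_r; [apply Cmod_ge_0|lra].
Qed.

(* Agrees with the principal logarithm only on the half-plane [Re u > 0]. *)
Definition CLog (u : C) : C := (ln (Cmod u), atan (Im u / Re u)).

Lemma Cmod_gt_0_of_Re (u : C) : (0 < Re u)%R -> (0 < Cmod u)%R.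
Proof. intros H. pose proof (re_le_Cmod u). pose proof (Rle_abs (Re u)). lra. Qed.

Lemma Cexp_CLog u : (0 < Re u)%R -> Cexp (CLog u) = u.
Proof.
intros H. destruct u as [a b]. unfold CLog. simpl in *.
pose proof (Cmod_gt_0_of_Re (a,b) H) as Hm.
rewrite Cexp_pair, exp_ln by exact Hm. rewrite cos_atan, sin_atan.
assert (E : sqrt (1 + (b / a)²) = (Cmod (a, b) / a)%R).
{ assert (Hs : (Cmod (a,b) * Cmod (a,b) = a * a + b * b)%R).
  { unfold Cmod; simpl. rewrite sqrt_sqrt. ring. nra. }
  apply sqrt_lem_1.
  - pose proof (Rle_0_sqr (b/a)). lra.
  - apply Rlt_le, Rdiv_lt_0_compat; lra.
  - unfold Rsqr. replace (Cmod (a, b) / a * (Cmod (a, b) / a))%R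
      with ((Cmod (a, b) * Cmod (a, b)) / (a * a))%R by (field; lra).
    rewrite Hs. field. lra. }
rewrite E. f_equal; field; split; lra.
Qed.

Lemma CLog_1 : CLog 1 = 0.
Proof. unfold CLog. simpl. rewrite Cmod_1, ln_1. unfold Rdiv. rewrite Rmult_0_l, atan_0. reflexivity. Qed.

Lemma continuity_pt_eps f x : continuity_pt f x <->
  forall eps, (0 < eps)%R -> exists delta, (0 < delta)%R /\
    forall y, (Rabs (y - x) < delta -> Rabs (f y - f x) < eps)%R.
Proof.
split.
- intros H eps Heps. destruct (H eps Heps) as [d [Hd Hy]].
  exists d. split; auto. intros y Hyx.
  destruct (Req_dec y x) as [->|Hne].
  + rewrite Rminus_diag, Rabs_R0. lra.
  + apply (Hy y). split; [split; [exact I | auto] | exact Hyx].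
- intros H eps Heps. destruct (H eps Heps) as [d [Hd Hy]].
  exists d. split; auto. intros y [_ Hyd]. apply Hy. exact Hyd.
Qed.

Lemma ratio_lipschitz a b c d r : (0 < a)%R ->
  (Rabs (c - a) <= r)%R -> (Rabs (d - b) <= r)%R -> (r <= a / 2)%R ->
  (Rabs (d / c - b / a) <= 2 * (a + Rabs b) * r / (a * a))%R.
Proof.
intros Ha Hc Hd Hr.
assert (Hca : (a / 2 <= c)%R) by (apply Rabs_le_between' in Hc; lra).
replace (d / c - b / a)%R with (((d - b) * a - b * (c - a)) / (a * c))%R by (field; lra).
unfold Rdiv. rewrite Rabs_mult, (Rabs_right (/ (a * c))) by (left; apply Rinv_0_lt_compat; nra).
assert (Hn : (Rabs ((d - b) * a - b * (c - a)) <= (a + Rabs b) * r)%R).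
{ eapply Rle_trans. apply Rabs_triang. rewrite Rabs_Ropp, !Rabs_mult, (Rabs_right a) by lra.
  pose proof (Rabs_pos b). pose proof (Rabs_pos (c - a)). nra. }
pose proof (Rabs_pos b). pose proof (Rabs_pos (c - a)).
apply Rle_trans with ((a + Rabs b) * r * / (a * (a / 2)))%R.
- apply Rmult_le_compat; try lra. apply Rabs_pos. left; apply Rinv_0_lt_compat; nra.
  apply Rinv_le_contravar; nra.
- right. field. lra.
Qed.

Lemma CLog_continuous u : (0 < Re u)%R ->
  forall eps, (0 < eps)%R -> exists delta, (0 < delta)%R /\
    forall y, (Cmod (y - u) < delta -> Cmod (CLog y - CLog u) < eps)%R.
Proof.
intros Ha eps Heps.
set (a := Re u) in *. set (b := Im u).
set (m := Cmod u). assert (Hm : (0 < m)%R) by (apply Cmod_gt_0_of_Re; auto).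
assert (Cln : continuity_pt ln m)
  by (apply derivable_continuous_pt; exists (/ m)%R; apply derivable_pt_lim_ln; lra).
assert (Catan : continuity_pt atan (b / a)) by (apply derivable_continuous_pt, derivable_pt_atan).
destruct (proj1 (continuity_pt_eps ln m) Cln (eps / 2)%R ltac:(lra)) as [d1 [Hd1 H1]].
destruct (proj1 (continuity_pt_eps atan (b / a)) Catan (eps / 2)%R ltac:(lra)) as [d2 [Hd2 H2]].
set (K := (2 * (a + Rabs b) / (a * a))%R).
assert (HK : (0 <= K)%R) by (unfold K; pose proof (Rabs_pos b); apply Rmult_le_pos; [nra|]; left; apply Rinv_0_lt_compat; nra).
set (delta := Rmin (Rmin d1 (a / 2)) (d2 / (K + 1))).
assert (Hdelta : (0 < delta)%R) by (unfold delta; repeat apply Rmin_pos; try apply Rdiv_lt_0_compat; lra).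
exists delta. split; auto. intros y Hy.
set (r := Cmod (y - u)) in *.
assert (Hr : (r < d1 /\ r < a / 2 /\ r * (K + 1) < d2)%R).
{ unfold delta in Hy. pose proof (Rmin_l (Rmin d1 (a / 2)) (d2 / (K + 1))).
  pose proof (Rmin_r (Rmin d1 (a / 2)) (d2 / (K + 1))). pose proof (Rmin_l d1 (a / 2)).
  pose proof (Rmin_r d1 (a / 2)). split; [lra|split; [lra|]].
  replace d2 with (d2 / (K + 1) * (K + 1))%R by (field; lra). apply Rmult_lt_compat_r; lra. }
assert (Hc : (Rabs (Re y - a) <= r)%R).
{ replace (Re y - a)%R with (Re (y - u)) by (unfold a; destruct y, u; simpl; ring). apply re_le_Cmod. }
assert (Hd : (Rabs (Im y - b) <= r)%R).
{ replace (Im y - b)%R with (Im (y - u)) by (unfold b; destruct y, u; simpl; ring). apply im_le_Cmod. }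
assert (Hre : (Rabs (ln (Cmod y) - ln m) < eps / 2)%R).
{ apply H1. pose proof (Cmod_triangle_inv y u). fold m r in H. lra. }
assert (Him : (Rabs (atan (Im y / Re y) - atan (b / a)) < eps / 2)%R).
{ apply H2. pose proof (ratio_lipschitz a b (Re y) (Im y) r Ha Hc Hd ltac:(lra)).
  fold K in H. pose proof (Cmod_ge_0 (y - u)). fold r in H0.
  replace (2 * (a + Rabs b) * r / (a * a))%R with (K * r)%R in H by (unfold K; field; lra). nra. }
eapply Rle_lt_trans. apply Cmod_le_Re_Im. unfold CLog. simpl. fold m a b. unfold Rminus in Hre, Him. lra.
Qed.

Lemma cderiv_CLog u : (0 < Re u)%R -> cderiv CLog u (/ u).
Proof.
intros Hu. apply cderiv_eps. intros eps.
assert (Hm : (0 < Cmod u)%R) by (apply Cmod_gt_0_of_Re; auto).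
assert (Hun : u <> 0) by (apply Cmod_gt_0; auto).
pose proof (cond_pos eps) as He.
set (e' := Rmin (1/2) (eps * Cmod u / 2)).
assert (He' : (0 < e')%R) by (unfold e'; apply Rmin_pos; nra).
destruct (Cexp_first_order e' He') as [d1 [Hd1 Hs]].
destruct (CLog_continuous u Hu d1 Hd1) as [d2 [Hd2 Hc]].
assert (Hp : (0 < Rmin d2 (Re u))%R) by (apply Rmin_pos; lra).
exists (mkposreal _ Hp). simpl. intros y Hy.
assert (Hy1 : (Cmod (y - u) < d2)%R) by (eapply Rlt_le_trans; [exact Hy| apply Rmin_l]).
assert (Hy2 : (Cmod (y - u) < Re u)%R) by (eapply Rlt_le_trans; [exact Hy| apply Rmin_r]).
assert (Hyr : (0 < Re y)%R).
{ pose proof (re_le_Cmod (y - u)). apply Rabs_le_between' in H. unfold Re in *. lra. }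
(* inverse-function argument: with [k := CLog y - CLog u], [y - u = u (e^k - 1)] *)
set (k := CLog y - CLog u).
specialize (Hs k (Hc y Hy1)).
assert (Ey : y - u = u * (Cexp k - 1)).
{ assert (Cexp (CLog u + k) = y)
    by (unfold k; replace (CLog u + (CLog y - CLog u)) with (CLog y) by ring; apply Cexp_CLog; auto).
  rewrite Cexp_plus, Cexp_CLog in H by auto. rewrite <- H. ring. }
replace (k - (y - u) * / u) with (- (Cexp k - 1 - k)) by (rewrite Ey; field; auto).
rewrite Cmod_opp.
assert (Hk2 : (Cmod k * Cmod u <= 2 * Cmod (y - u))%R).
{ rewrite Ey, Cmod_mult.
  assert (Cmod k <= Cmod (Cexp k - 1) + Cmod (Cexp k - 1 - k))%R.
  { pose proof (Cmod_triangle (Cexp k - 1) (- (Cexp k - 1 - k))). rewrite Cmod_opp in H.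
    replace (Cexp k - 1 + - (Cexp k - 1 - k)) with k in H by ring. exact H. }
  assert (e' <= 1/2)%R by (unfold e'; apply Rmin_l).
  pose proof (Cmod_ge_0 k). pose proof (Cmod_ge_0 (Cexp k - 1)).
  assert (Cmod k <= 2 * Cmod (Cexp k - 1))%R by nra.
  rewrite Rmult_comm. nra. }
assert (e' <= eps * Cmod u / 2)%R by (unfold e'; apply Rmin_r).
pose proof (Cmod_ge_0 k).
apply Rle_trans with (e' * Cmod k)%R; auto.
apply Rle_trans with (eps * Cmod u / 2 * Cmod k)%R. apply Rmult_le_compat_r; auto.
nra.
Qed.

Definition rderiv (g : R -> C) (t : R) (l : C) : Prop :=
  forall eps, (0 < eps)%R -> exists delta, (0 < delta)%R /\ forall h : R,
    (Rabs h < delta -> Cmod (g (t + h)%R - g t - RtoC h * l) <= eps * Rabs h)%R.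

Lemma rderiv_Re g t l : rderiv g t l -> derivable_pt_lim (fun s => Re (g s)) t (Re l).
Proof.
intros H. apply derivable_pt_lim_eps. intros eps He. destruct (H eps He) as [d [Hd Hh]].
exists d; split; auto. intros h Hlt. specialize (Hh h Hlt).
eapply Rle_trans; [|exact Hh]. eapply Rle_trans; [|apply re_le_Cmod].
right. f_equal. destruct (g (t+h)%R), (g t), l; simpl. ring.
Qed.

Lemma rderiv_Im g t l : rderiv g t l -> derivable_pt_lim (fun s => Im (g s)) t (Im l).
Proof.
intros H. apply derivable_pt_lim_eps. intros eps He. destruct (H eps He) as [d [Hd Hh]].
exists d; split; auto. intros h Hlt. specialize (Hh h Hlt).
eapply Rle_trans; [|exact Hh]. eapply Rle_trans; [|apply im_le_Cmod].
right. f_equal. destruct (g (t+h)%R), (g t), l; simpl. ring.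
Qed.

Lemma rderiv_of_Re_Im g t l : derivable_pt_lim (fun s => Re (g s)) t (Re l) ->
  derivable_pt_lim (fun s => Im (g s)) t (Im l) -> rderiv g t l.
Proof.
rewrite !derivable_pt_lim_eps. intros H1 H2 eps He.
destruct (H1 (eps/2)%R ltac:(lra)) as [d1 [Hd1 E1]].
destruct (H2 (eps/2)%R ltac:(lra)) as [d2 [Hd2 E2]].
exists (Rmin d1 d2). split. apply Rmin_pos; auto. intros h Hh.
specialize (E1 h (Rlt_le_trans _ _ _ Hh (Rmin_l _ _))).
specialize (E2 h (Rlt_le_trans _ _ _ Hh (Rmin_r _ _))).
eapply Rle_trans. apply Cmod_le_Re_Im.
replace (Re (g (t + h)%R - g t - h * l)) with (Re (g (t + h)%R) - Re (g t) - h * Re l)%R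
  by (destruct (g (t+h)%R), (g t), l; simpl; ring).
replace (Im (g (t + h)%R - g t - h * l)) with (Im (g (t + h)%R) - Im (g t) - h * Im l)%R
  by (destruct (g (t+h)%R), (g t), l; simpl; ring).
lra.
Qed.

Lemma rderiv_lipschitz g t l : rderiv g t l -> exists delta, (0 < delta)%R /\ forall h : R,
  (Rabs h < delta -> Cmod (g (t + h)%R - g t) <= (Cmod l + 1) * Rabs h)%R.
Proof.
intros H. destruct (H 1%R Rlt_0_1) as [d [Hd Hh]]. exists d; split; auto.
intros h Hl. specialize (Hh h Hl).
replace (g (t + h)%R - g t) with ((g (t + h)%R - g t - h * l) + h * l) by ring.
eapply Rle_trans. apply Cmod_triangle. rewrite Cmod_mult, Cmod_R.
pose proof (Rabs_pos h). nra.
Qed.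

Lemma rderiv_comp (f : C -> C) g t a l :
  cderiv f (g t) a -> rderiv g t l -> rderiv (fun s => f (g s)) t (a * l).
Proof.
intros Hf Hg eps He.
pose proof (proj1 (cderiv_eps f (g t) a) Hf) as Hf'.
destruct (rderiv_lipschitz g t l Hg) as [d0 [Hd0 Hl]].
set (K := (Cmod l + 1)%R). assert (HK : (0 < K)%R) by (unfold K; pose proof (Cmod_ge_0 l); lra).
set (Ka := (Cmod a + 1)%R). assert (HKa : (0 < Ka)%R) by (unfold Ka; pose proof (Cmod_ge_0 a); lra).
destruct (Hf' (mkposreal (eps / (2 * K)) ltac:(apply Rdiv_lt_0_compat; lra))) as [d1 Hd1]. simpl in Hd1.
destruct (Hg (eps / (2 * Ka))%R ltac:(apply Rdiv_lt_0_compat; lra)) as [d2 [Hd2 Hg2]].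
set (delta := Rmin (Rmin d0 d2) (d1 / K)).
assert (Hp : (0 < delta)%R)
  by (unfold delta; repeat apply Rmin_pos; try lra; apply Rdiv_lt_0_compat; [apply cond_pos|lra]).
exists delta. split; auto. intros h Hh.
assert (Hmin : (Rabs h < d0 /\ Rabs h < d2 /\ Rabs h * K < d1)%R).
{ unfold delta in Hh. pose proof (Rmin_l (Rmin d0 d2) (d1 / K)). pose proof (Rmin_r (Rmin d0 d2) (d1 / K)).
  pose proof (Rmin_l d0 d2). pose proof (Rmin_r d0 d2). split; [lra|split; [lra|]].
  replace (pos d1) with (d1 / K * K)%R by (field; lra). apply Rmult_lt_compat_r; lra. }
destruct Hmin as [h0 [h2 h1]].
specialize (Hl h h0). specialize (Hg2 h h2). change (Cmod l + 1)%R with K in Hl.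
specialize (Hd1 (g (t + h)%R) ltac:(lra)).
replace (f (g (t + h)%R) - f (g t) - h * (a * l)) with
  ((f (g (t + h)%R) - f (g t) - (g (t + h)%R - g t) * a) + a * (g (t + h)%R - g t - h * l)) by ring.
eapply Rle_trans. apply Cmod_triangle. rewrite Cmod_mult.
pose proof (Cmod_ge_0 a). pose proof (Rabs_pos h).
assert (A1 : (eps / (2 * K) * Cmod (g (t + h)%R - g t) <= eps / 2 * Rabs h)%R).
{ apply Rle_trans with (eps / (2 * K) * (K * Rabs h))%R.
  apply Rmult_le_compat_l. apply Rlt_le, Rdiv_lt_0_compat; lra. exact Hl.
  right. field. lra. }
assert (A2 : (Cmod a * Cmod (g (t + h)%R - g t - h * l) <= eps / 2 * Rabs h)%R).
{ apply Rle_trans with (Ka * (eps / (2 * Ka) * Rabs h))%R.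
  apply Rmult_le_compat; auto. apply Cmod_ge_0. unfold Ka; lra.
  right. field. lra. }
lra.
Qed.

Lemma rderiv_mult g1 g2 t l1 l2 : rderiv g1 t l1 -> rderiv g2 t l2 ->
  rderiv (fun s => g1 s * g2 s) t (l1 * g2 t + g1 t * l2).
Proof.
intros H1 H2 eps He.
destruct (rderiv_lipschitz g1 t l1 H1) as [d0 [Hd0 Hl]].
destruct (rderiv_lipschitz g2 t l2 H2) as [d3 [Hd3 Hl3]].
set (K := (Cmod l1 + 1)%R). assert (HK : (0 < K)%R) by (unfold K; pose proof (Cmod_ge_0 l1); lra).
set (L2 := (Cmod l2 + 1)%R). assert (HL2 : (0 < L2)%R) by (unfold L2; pose proof (Cmod_ge_0 l2); lra).
set (A := (Cmod (g2 t) + 1)%R). assert (HA : (0 < A)%R) by (unfold A; pose proof (Cmod_ge_0 (g2 t)); lra).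
set (B := (Cmod (g1 t) + 1)%R). assert (HB : (0 < B)%R) by (unfold B; pose proof (Cmod_ge_0 (g1 t)); lra).
destruct (H1 (eps / (3 * A))%R ltac:(apply Rdiv_lt_0_compat; lra)) as [d1 [Hd1 E1]].
destruct (H2 (eps / (3 * B))%R ltac:(apply Rdiv_lt_0_compat; lra)) as [d2 [Hd2 E2]].
set (d4 := (eps / (3 * K * L2))%R). assert (Hd4 : (0 < d4)%R) by (unfold d4; apply Rdiv_lt_0_compat; nra).
exists (Rmin (Rmin d0 d1) (Rmin d2 (Rmin d3 d4))). split. repeat apply Rmin_pos; lra.
intros h Hh.
apply Rmin_Rgt in Hh as [Hh Hh']. apply Rmin_Rgt in Hh as [h0 h1].
apply Rmin_Rgt in Hh' as [h2 Hh']. apply Rmin_Rgt in Hh' as [h3 h4].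
specialize (Hl h h0). specialize (E1 h h1). specialize (E2 h h2). specialize (Hl3 h h3).
set (u1 := g1 (t + h)%R - g1 t) in *. set (u2 := g2 (t + h)%R - g2 t) in *.
replace (g1 (t + h)%R * g2 (t + h)%R - g1 t * g2 t - h * (l1 * g2 t + g1 t * l2)) with
  ((u1 - h * l1) * g2 t + g1 t * (u2 - h * l2) + u1 * u2) by (unfold u1, u2; ring).
eapply Rle_trans. apply Cmod_triangle. eapply Rle_trans. apply Rplus_le_compat_r. apply Cmod_triangle.
rewrite !Cmod_mult.
pose proof (Rabs_pos h). pose proof (Cmod_ge_0 (g2 t)). pose proof (Cmod_ge_0 (g1 t)).
pose proof (Cmod_ge_0 u1). pose proof (Cmod_ge_0 u2).
assert (T1 : (Cmod (u1 - h * l1) * Cmod (g2 t) <= eps / 3 * Rabs h)%R).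
{ apply Rle_trans with (eps / (3 * A) * Rabs h * A)%R.
  apply Rmult_le_compat; try lra. apply Cmod_ge_0. unfold A; lra. right; field; lra. }
assert (T2 : (Cmod (g1 t) * Cmod (u2 - h * l2) <= eps / 3 * Rabs h)%R).
{ apply Rle_trans with (B * (eps / (3 * B) * Rabs h))%R.
  apply Rmult_le_compat; try lra. apply Cmod_ge_0. unfold B; lra. right; field; lra. }
assert (T3 : (Cmod u1 * Cmod u2 <= eps / 3 * Rabs h)%R).
{ apply Rle_trans with ((K * Rabs h) * (L2 * Rabs h))%R. apply Rmult_le_compat; auto.
  apply Rle_trans with ((K * L2 * d4) * Rabs h)%R.
  replace (K * Rabs h * (L2 * Rabs h))%R with ((K * L2 * Rabs h) * Rabs h)%R by ring.
  apply Rmult_le_compat_r; auto. apply Rmult_le_compat_l; nra.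
  right. unfold d4. field. nra. }
lra.
Qed.

Lemma rderiv_const (c : C) t : rderiv (fun _ => c) t 0.
Proof.
intros eps He. exists 1%R. split. lra. intros h _.
replace (c - c - h * 0) with (RtoC 0) by ring. rewrite Cmod_0. pose proof (Rabs_pos h). nra.
Qed.

Lemma rderiv_sub_const g t l (q : C) : rderiv g t l -> rderiv (fun s => g s - q) t l.
Proof.
intros H eps He. destruct (H eps He) as [d [Hd Hh]]. exists d; split; auto. intros h Hl.
replace (g (t + h)%R - q - (g t - q) - h * l) with (g (t + h)%R - g t - h * l) by ring. auto.
Qed.

Lemma rderiv_mean_value (g g' : R -> C) (K : R) :
  (forall s, (0 <= s <= 1)%R -> rderiv g s (g' s)) ->
  (forall s, (0 <= s <= 1)%R -> (Cmod (g' s) <= K)%R) ->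
  (Cmod (g 1 - g 0) <= 2 * K)%R.
Proof.
intros Hg HK.
destruct (MVT_cor2 (fun s => Re (g s)) (fun s => Re (g' s)) 0 1 Rlt_0_1) as [c [Ec Hc]].
{ intros c Hc. apply rderiv_Re. auto. }
destruct (MVT_cor2 (fun s => Im (g s)) (fun s => Im (g' s)) 0 1 Rlt_0_1) as [c' [Ec' Hc']].
{ intros c' Hc'. apply rderiv_Im. auto. }
rewrite Rminus_0_r, Rmult_1_r in Ec, Ec'.
eapply Rle_trans. apply Cmod_le_Re_Im.
replace (Re (g 1 - g 0)) with (Re (g 1) - Re (g 0))%R by (destruct (g 1), (g 0); simpl; ring).
replace (Im (g 1 - g 0)) with (Im (g 1) - Im (g 0))%R by (destruct (g 1), (g 0); simpl; ring).
rewrite Ec, Ec'.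
pose proof (re_le_Cmod (g' c)). pose proof (im_le_Cmod (g' c')).
pose proof (HK c ltac:(lra)). pose proof (HK c' ltac:(lra)). lra.
Qed.

Definition Cdot (z w : C) : R := (Re z * Re w + Im z * Im w)%R.
Definition Cnorm2 (z : C) : R := Cdot z z.

Lemma Cnorm2_Cmod z : Cnorm2 z = (Cmod z * Cmod z)%R.
Proof. unfold Cnorm2, Cdot, Cmod. destruct z as [a b]; simpl. rewrite sqrt_sqrt. ring. nra. Qed.

Lemma Cdot_deriv G G1 t L L1 : rderiv G t L -> rderiv G1 t L1 ->
  derivable_pt_lim (fun s => Cdot (G s) (G1 s)) t (Cdot L (G1 t) + Cdot (G t) L1)%R.
Proof.
intros H H1. unfold Cdot.
apply rderiv_Re in H as HR. apply rderiv_Im in H as HI.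
apply rderiv_Re in H1 as HR1. apply rderiv_Im in H1 as HI1.
replace (Re L * Re (G1 t) + Im L * Im (G1 t) + (Re (G t) * Re L1 + Im (G t) * Im L1))%R with
  ((Re L * Re (G1 t) + Re (G t) * Re L1) + (Im L * Im (G1 t) + Im (G t) * Im L1))%R by ring.
apply (derivable_pt_lim_plus (fun s => Re (G s) * Re (G1 s))%R (fun s => Im (G s) * Im (G1 s))%R).
apply (derivable_pt_lim_mult (fun s => Re (G s)) (fun s => Re (G1 s))); auto.
apply (derivable_pt_lim_mult (fun s => Im (G s)) (fun s => Im (G1 s))); auto.
Qed.

Lemma Cnorm2_deriv G t L : rderiv G t L ->
  derivable_pt_lim (fun s => Cnorm2 (G s)) t (2 * Cdot (G t) L)%R.
Proof.
intros H. unfold Cnorm2. replace (2 * Cdot (G t) L)%R with (Cdot L (G t) + Cdot (G t) L)%R by (unfold Cdot; ring).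
apply Cdot_deriv; auto.
Qed.

Definition line (a b : C) (s : R) : C := a + RtoC s * b.

Lemma rderiv_line a b s : rderiv (line a b) s b.
Proof.
intros eps He. exists 1%R. split. lra. intros h _.
unfold line. replace (a + RtoC (s + h)%R * b - (a + RtoC s * b) - RtoC h * b) with (RtoC 0)
  by (rewrite RtoC_plus; ring).
rewrite Cmod_0. pose proof (Rabs_pos h). nra.
Qed.

Lemma Cmod_line (a b : C) s : Cmod (line a b s - a) = (Rabs s * Cmod b)%R.
Proof. unfold line. replace (a + s * b - a) with (RtoC s * b) by ring. rewrite Cmod_mult, Cmod_R. reflexivity. Qed.

Lemma line_0 (a b : C) : line a b 0 = a.
Proof. unfold line. ring. Qed.

Definition Cpolar (r t : R) : C := (r * cos t, r * sin t)%R.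

Lemma Cmod_Cpolar r t : (0 <= r)%R -> Cmod (Cpolar r t) = r.
Proof.
intros Hr. unfold Cpolar, Cmod; simpl.
replace (r * cos t * (r * cos t * 1) + r * sin t * (r * sin t * 1))%R
  with (r * r * (Rsqr (sin t) + Rsqr (cos t)))%R by (unfold Rsqr; ring).
rewrite sin2_cos2, Rmult_1_r. apply sqrt_square. auto.
Qed.

Lemma rderiv_Cpolar r t : rderiv (Cpolar r) t (Ci * Cpolar r t).
Proof.
apply rderiv_of_Re_Im.
- replace (Re (Ci * Cpolar r t)) with (r * (- sin t))%R by (unfold Ci, Cpolar; simpl; ring).
  apply derivable_pt_lim_scal, derivable_pt_lim_cos.
- replace (Im (Ci * Cpolar r t)) with (r * cos t)%R by (unfold Ci, Cpolar; simpl; ring).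
  apply derivable_pt_lim_scal, derivable_pt_lim_sin.
Qed.

Lemma rderiv_Ci_Cpolar r t : rderiv (fun s => Ci * Cpolar r s) t (- Cpolar r t).
Proof.
apply rderiv_of_Re_Im.
- apply derivable_pt_lim_ext with (fun s => - (r * sin s))%R. { intros; unfold Ci, Cpolar; simpl; ring. }
  replace (Re (- Cpolar r t)) with (- (r * cos t))%R by (unfold Cpolar; simpl; ring).
  apply derivable_pt_lim_opp, derivable_pt_lim_scal, derivable_pt_lim_sin.
- apply derivable_pt_lim_ext with (fun s => r * cos s)%R. { intros; unfold Ci, Cpolar; simpl; ring. }
  replace (Im (- Cpolar r t)) with (r * (- sin t))%R by (unfold Cpolar; simpl; ring).
  apply derivable_pt_lim_scal, derivable_pt_lim_cos.
Qed.

Lemma left_max_deriv_ge0 (k : R -> R) r l delta : (0 < delta)%R -> derivable_pt_lim k r l ->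
  (forall s, (r - delta < s < r)%R -> (k s <= k r)%R) -> (0 <= l)%R.
Proof.
intros Hd Hk Hm. apply Rnot_lt_le. intro Hl.
destruct (Hk (- l)%R ltac:(lra)) as [d Hdd]. pose proof (cond_pos d).
set (h := (- Rmin (d/2) (delta/2))%R).
pose proof (Rmin_pos (d/2) (delta/2) ltac:(lra) ltac:(lra)).
pose proof (Rmin_l (d/2) (delta/2)). pose proof (Rmin_r (d/2) (delta/2)).
assert (Hh : (h < 0 /\ - delta < h)%R) by (unfold h; lra).
specialize (Hdd h ltac:(lra) ltac:(unfold h; rewrite Rabs_Ropp, Rabs_right; lra)).
specialize (Hm (r + h)%R ltac:(lra)).
apply Rabs_def2 in Hdd. destruct Hdd as [Hdd _].
assert ((k (r + h) - k r) / h >= 0)%R.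
{ unfold Rdiv. replace ((k (r + h) - k r) * / h)%R with ((k r - k (r + h)) * / (- h))%R by (field; lra).
  apply Rle_ge, Rmult_le_pos; [lra| left; apply Rinv_0_lt_compat; lra]. }
lra.
Qed.

Lemma right_max_deriv_le0 (k : R -> R) r l delta : (0 < delta)%R -> derivable_pt_lim k r l ->
  (forall s, (r < s < r + delta)%R -> (k s <= k r)%R) -> (l <= 0)%R.
Proof.
intros Hd Hk Hm.
assert (Hk' : derivable_pt_lim (fun s => k (2 * r - s)%R) r (- l)%R).
{ replace (- l)%R with (l * (0 - 1))%R by ring.
  apply (derivable_pt_lim_comp (fun s => 2 * r - s)%R k).
  - apply derivable_pt_lim_minus. apply derivable_pt_lim_const. apply derivable_pt_lim_id.
  - replace (2 * r - r)%R with r by ring. exact Hk. }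
enough (0 <= - l)%R by lra.
apply (left_max_deriv_ge0 _ r (- l) delta Hd Hk'). intros s Hs.
replace (2 * r - r)%R with r by ring. apply Hm. lra.
Qed.

Lemma local_max_deriv_eq0 (f : R -> R) t0 l delta : (0 < delta)%R ->
  derivable_pt_lim f t0 l ->
  (forall s, (Rabs (s - t0) < delta)%R -> (f s <= f t0)%R) -> l = 0%R.
Proof.
intros Hd Hder Hm. apply Rle_antisym.
- apply (right_max_deriv_le0 f t0 l delta Hd Hder). intros s Hs. apply Hm. rewrite Rabs_right; lra.
- apply (left_max_deriv_ge0 f t0 l delta Hd Hder). intros s Hs. apply Hm. rewrite Rabs_left; lra.
Qed.

Lemma local_max_deriv2_le0 (f f1 : R -> R) t0 f2 delta : (0 < delta)%R ->
  (forall s, (Rabs (s - t0) < delta)%R -> derivable_pt_lim f s (f1 s)) ->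
  derivable_pt_lim f1 t0 f2 ->
  (forall s, (Rabs (s - t0) < delta)%R -> (f s <= f t0)%R) -> (f2 <= 0)%R.
Proof.
intros Hd Hder H2 Hm.
assert (H0 : f1 t0 = 0%R).
{ apply (local_max_deriv_eq0 f t0 _ delta Hd); auto. apply Hder. rewrite Rminus_diag, Rabs_R0. lra. }
apply Rnot_lt_le. intro Hl.
destruct (H2 f2 Hl) as [d Hdd]. pose proof (cond_pos d).
set (h := Rmin (d/2) (delta/2)).
pose proof (Rmin_pos (d/2) (delta/2) ltac:(lra) ltac:(lra)).
pose proof (Rmin_l (d/2) (delta/2)). pose proof (Rmin_r (d/2) (delta/2)).
assert (Hh : (0 < h /\ h < d /\ h < delta)%R) by (unfold h; lra).
(* f1 > 0 on (t0, t0 + h], so f increases there *)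
destruct (MVT_cor2 f f1 t0 (t0 + h)%R ltac:(lra)) as [c [Ec Hc]].
{ intros c Hc. apply Hder. apply Rabs_def1; lra. }
assert (Hpos : (0 < f1 c)%R).
{ specialize (Hdd (c - t0)%R ltac:(lra) ltac:(rewrite Rabs_right; lra)).
  replace (t0 + (c - t0))%R with c in Hdd by ring. rewrite H0 in Hdd.
  apply Rabs_def2 in Hdd. destruct Hdd as [_ Hdd].
  assert (0 < f1 c / (c - t0))%R by (rewrite Rminus_0_r in Hdd; lra).
  apply Rmult_lt_reg_r with (/ (c - t0))%R. apply Rinv_0_lt_compat; lra. lra. }
specialize (Hm (t0 + h)%R ltac:(replace (t0 + h - t0)%R with h by ring; rewrite Rabs_right; lra)).
assert (0 < f1 c * (t0 + h - t0))%R by (apply Rmult_lt_0_compat; lra).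
lra.
Qed.

Definition perturbed_norm2 (F : C -> C) (eps : R) (q z : C) : R :=
  (Cnorm2 (F z) + eps * Cnorm2 (z - q))%R.

Lemma curve_max_first_order (c : R -> C) c1 (F : C -> C) F1 t0 (q : C) (eps delta : R) :
  (0 < delta)%R -> rderiv c t0 c1 -> cderiv F (c t0) F1 ->
  (forall s, (Rabs (s - t0) < delta)%R ->
     (perturbed_norm2 F eps q (c s) <= perturbed_norm2 F eps q (c t0))%R) ->
  (Cdot (F (c t0)) (F1 * c1) + eps * Cdot (c t0 - q) c1 = 0)%R.
Proof.
intros Hd Hc HF Hm.
assert (D : derivable_pt_lim (fun s => perturbed_norm2 F eps q (c s)) t0
   (2 * Cdot (F (c t0)) (F1 * c1) + eps * (2 * Cdot (c t0 - q) c1))%R).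
{ apply derivable_pt_lim_plus.
  - apply (Cnorm2_deriv (fun s => F (c s))). apply rderiv_comp; auto.
  - apply derivable_pt_lim_scal. apply (Cnorm2_deriv (fun s => c s - q)). apply rderiv_sub_const; auto. }
pose proof (local_max_deriv_eq0 _ t0 _ delta Hd D Hm). lra.
Qed.

Lemma curve_max_second_order (c c1 : R -> C) c2 (F F1 : C -> C) F2 t0 (q : C) (eps delta : R) :
  (0 < delta)%R ->
  (forall s, (Rabs (s - t0) < delta)%R -> rderiv c s (c1 s)) ->
  rderiv c1 t0 c2 ->
  (forall s, (Rabs (s - t0) < delta)%R -> cderiv F (c s) (F1 (c s))) ->
  cderiv F1 (c t0) F2 ->
  (forall s, (Rabs (s - t0) < delta)%R ->
     (perturbed_norm2 F eps q (c s) <= perturbed_norm2 F eps q (c t0))%R) ->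
  (Cdot (F (c t0)) (F1 (c t0) * c1 t0) + eps * Cdot (c t0 - q) (c1 t0) = 0)%R /\
  ((Cdot (F (c t0)) (F2 * c1 t0 * c1 t0 + F1 (c t0) * c2) + Cnorm2 (F1 (c t0) * c1 t0))
    + eps * (Cdot (c t0 - q) c2 + Cnorm2 (c1 t0)) <= 0)%R.
Proof.
intros Hd Hc Hc1 HF HF1 Hm.
assert (H0 : (Rabs (t0 - t0) < delta)%R) by (rewrite Rminus_diag, Rabs_R0; lra).
set (phi1 := fun s => (2 * Cdot (F (c s)) (F1 (c s) * c1 s) + eps * (2 * Cdot (c s - q) (c1 s)))%R).
assert (D1 : forall s, (Rabs (s - t0) < delta)%R ->
   derivable_pt_lim (fun s => perturbed_norm2 F eps q (c s)) s (phi1 s)).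
{ intros s Hs. apply derivable_pt_lim_plus.
  - apply (Cnorm2_deriv (fun s => F (c s))). apply rderiv_comp; auto.
  - apply derivable_pt_lim_scal. apply (Cnorm2_deriv (fun s => c s - q)). apply rderiv_sub_const; auto. }
assert (D2 : derivable_pt_lim phi1 t0
  (2 * (Cnorm2 (F1 (c t0) * c1 t0) + Cdot (F (c t0)) (F2 * c1 t0 * c1 t0 + F1 (c t0) * c2))
   + eps * (2 * (Cnorm2 (c1 t0) + Cdot (c t0 - q) c2)))%R).
{ apply derivable_pt_lim_plus.
  - apply derivable_pt_lim_scal. apply (Cdot_deriv (fun s => F (c s)) (fun s => F1 (c s) * c1 s)).
    + apply rderiv_comp; auto.
    + apply rderiv_mult; auto. apply rderiv_comp; auto.
  - do 2 apply derivable_pt_lim_scal. apply (Cdot_deriv (fun s => c s - q) c1); auto.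
    apply rderiv_sub_const; auto. }
split.
- pose proof (local_max_deriv_eq0 _ t0 _ delta Hd (D1 t0 H0) Hm). unfold phi1 in H. lra.
- pose proof (local_max_deriv2_le0 _ phi1 t0 _ delta Hd D1 D2 Hm). lra.
Qed.

Lemma lipschitz_of_deriv_bound (f f' : R -> R) :
  (forall x, derivable_pt_lim f x (f' x)) -> (forall x, (Rabs (f' x) <= 1)%R) ->
  forall a b, (Rabs (f a - f b) <= Rabs (a - b))%R.
Proof.
intros Hd Hb.
assert (Hlt : forall a b, (a < b)%R -> (Rabs (f b - f a) <= Rabs (b - a))%R).
{ intros a b H. destruct (MVT_cor2 f f' a b H) as [c [E _]]; auto.
  rewrite E, Rabs_mult. pose proof (Hb c). pose proof (Rabs_pos (b - a)). nra. }
intros a b. destruct (Rtotal_order a b) as [H|[H|H]].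
- rewrite (Rabs_minus_sym (f a)), (Rabs_minus_sym a). auto.
- subst. rewrite !Rminus_diag, Rabs_R0. lra.
- auto.
Qed.

Lemma Cpolar_diff r r' t t' :
  (Cmod (Cpolar r t - Cpolar r' t') <= 2 * Rabs (r - r') + 2 * Rabs r' * Rabs (t - t'))%R.
Proof.
assert (Lc := lipschitz_of_deriv_bound cos (fun x => - sin x)%R derivable_pt_lim_cos
  ltac:(intros x; cbv beta; rewrite Rabs_Ropp; pose proof (SIN_bound x); apply Rabs_le; lra) t t').
assert (Ls := lipschitz_of_deriv_bound sin cos derivable_pt_lim_sin
  ltac:(intros x; pose proof (COS_bound x); apply Rabs_le; lra) t t').
eapply Rle_trans. apply Cmod_le_Re_Im. unfold Cpolar; simpl.
replace (r * cos t + - (r' * cos t'))%R with ((r - r') * cos t + r' * (cos t - cos t'))%R by ring.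
replace (r * sin t + - (r' * sin t'))%R with ((r - r') * sin t + r' * (sin t - sin t'))%R by ring.
pose proof (Rabs_triang ((r - r') * cos t) (r' * (cos t - cos t'))).
pose proof (Rabs_triang ((r - r') * sin t) (r' * (sin t - sin t'))).
rewrite !Rabs_mult in *.
assert (Rabs (cos t) <= 1)%R by (pose proof (COS_bound t); apply Rabs_le; lra).
assert (Rabs (sin t) <= 1)%R by (pose proof (SIN_bound t); apply Rabs_le; lra).
pose proof (Rabs_pos (r - r')). pose proof (Rabs_pos r').
pose proof (Rabs_pos (cos t)). pose proof (Rabs_pos (sin t)).
pose proof (Rabs_pos (cos t - cos t')). pose proof (Rabs_pos (sin t - sin t')).
nra.
Qed.

Lemma polar_form (z : C) : exists t, (0 <= t <= 2 * PI)%R /\ z = Cpolar (Cmod z) t.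
Proof.
destruct (Ceq_dec z 0) as [->|Hz].
{ exists 0%R. split. pose proof PI_RGT_0; lra. rewrite Cmod_0. unfold Cpolar. rewrite !Rmult_0_l. reflexivity. }
pose proof (proj1 (Cmod_gt_0 z) Hz) as Hm.
destruct z as [a b]. set (m := Cmod (a, b)) in *.
assert (Hs : (m * m = a * a + b * b)%R) by (unfold m, Cmod; simpl; rewrite sqrt_sqrt; [ring|nra]).
assert (Ha : (-1 <= a / m <= 1)%R).
{ split; apply Rmult_le_reg_r with m; auto; unfold Rdiv; rewrite Rmult_assoc, Rinv_l by lra; nra. }
assert (Hsq : sqrt (1 - (a / m)²) = (Rabs b / m)%R).
{ apply sqrt_lem_1. unfold Rsqr. nra. apply Rmult_le_pos. apply Rabs_pos. left; apply Rinv_0_lt_compat; lra.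
  unfold Rsqr. replace (Rabs b / m * (Rabs b / m))%R with ((Rabs b * Rabs b) / (m * m))%R by (field; lra).
  replace (Rabs b * Rabs b)%R with (m * m - a * a)%R by (rewrite <- Rabs_mult, Rabs_right; nra).
  field. lra. }
pose proof (acos_bound (a / m)).
destruct (Rle_dec 0 b) as [Hb|Hb].
- exists (acos (a / m)). split. lra.
  unfold Cpolar. rewrite cos_acos, sin_acos, Hsq by auto. rewrite Rabs_right by lra.
  f_equal; field; lra.
- exists (2 * PI - acos (a / m))%R. split. lra.
  unfold Cpolar. rewrite cos_minus, sin_minus, cos_2PI, sin_2PI, cos_acos, sin_acos, Hsq by auto.
  rewrite Rabs_left by lra. f_equal; field; lra.
Qed.

(* [clamp r0] is the projection of [R] onto [[0, r0]]; it lets the closed disk be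
   parametrized by all of [R * R] *)
Definition clamp (r0 r : R) : R := Rmax 0 (Rmin r r0).

Lemma clamp_bounds r0 r : (0 <= r0)%R -> (0 <= clamp r0 r <= r0)%R.
Proof. intros H. unfold clamp. split. apply Rmax_l. apply Rmax_lub; auto. apply Rmin_r. Qed.

Lemma clamp_lipschitz r0 r r' : (0 <= r0)%R -> (Rabs (clamp r0 r - clamp r0 r') <= Rabs (r - r'))%R.
Proof.
intros H. unfold clamp, Rmax, Rmin.
repeat (destruct (Rle_dec _ _)); unfold Rabs; repeat destruct Rcase_abs; lra.
Qed.

Lemma clamp_id r0 r : (0 <= r <= r0)%R -> clamp r0 r = r.
Proof. intros H. unfold clamp. rewrite Rmin_left by lra. rewrite Rmax_right by lra. reflexivity. Qed.

Lemma max_in_param_continuous (W : R -> R -> R) (a b : R) : (a <= b)%R ->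
  (forall r t eps, (0 < eps)%R -> exists delta, (0 < delta)%R /\ forall r' t',
     (Rabs (r' - r) < delta)%R -> (Rabs (t' - t) < delta)%R -> (Rabs (W r' t' - W r t) < eps)%R) ->
  exists tm : R -> R,
    (forall r, (a <= tm r <= b)%R /\ forall s, (a <= s <= b)%R -> (W r s <= W r (tm r))%R) /\
    forall r, continuity_pt (fun r => W r (tm r)) r.
Proof.
intros Hab HW.
assert (Hmax : forall r, exists t, (a <= t <= b)%R /\ forall s, (a <= s <= b)%R -> (W r s <= W r t)%R).
{ intros r. destruct (continuity_ab_maj (W r) a b Hab) as [t [Ht1 Ht2]].
  - intros c _. apply continuity_pt_eps. intros eps He. destruct (HW r c eps He) as [d [Hd Hy]].
    exists d. split; auto. intros y Hyc. apply Hy; auto. rewrite Rminus_diag, Rabs_R0. lra.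
  - exists t. split; auto. }
destruct (choice _ Hmax) as [tm Htm]. exists tm. split; auto.
intros r. apply continuity_pt_eps. intros eps He.
assert (Hg : forall t, exists d : posreal, forall r' t',
   (Rabs (r' - r) < d)%R -> (Rabs (t' - t) < d)%R -> (Rabs (W r' t' - W r t) < eps / 3)%R).
{ intros t. destruct (HW r t (eps/3)%R ltac:(lra)) as [d [Hd Hy]]. exists (mkposreal d Hd). auto. }
destruct (choice _ Hg) as [dl Hdl].
set (dl2 := fun t => mkposreal (dl t / 2) ltac:(pose proof (cond_pos (dl t)); lra)).
destruct (compactness_value_1d a b dl2) as [d Hd].
exists d. split. apply cond_pos. intros r' Hr'.
assert (U : forall t, (a <= t <= b)%R -> (Rabs (W r' t - W r t) < 2 * eps / 3)%R).
{ intros t Ht. specialize (Hd t Ht). apply NNPP. intro Hn. apply Hd. intros [u [Hu1 [Hu2 Hu3]]].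
  apply Hn. simpl in Hu2, Hu3. pose proof (cond_pos (dl u)).
  assert (A1 : (Rabs (W r' t - W r u) < eps / 3)%R) by (apply Hdl; lra).
  assert (A2 : (Rabs (W r t - W r u) < eps / 3)%R) by (apply Hdl; [rewrite Rminus_diag, Rabs_R0|]; lra).
  replace (W r' t - W r t)%R with ((W r' t - W r u) - (W r t - W r u))%R by ring.
  eapply Rle_lt_trans. apply Rabs_triang. rewrite Rabs_Ropp. lra. }
destruct (Htm r) as [T1 T2]. destruct (Htm r') as [T3 T4].
pose proof (U _ T1). pose proof (U _ T3). pose proof (T2 _ T3). pose proof (T4 _ T1).
apply Rabs_def1; apply Rabs_def2 in H; apply Rabs_def2 in H0; lra.
Qed.

Lemma closed_disk_max (V : C -> R) r0 : (0 <= r0)%R ->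
  (forall z, (Cmod z <= r0)%R -> forall eps, (0 < eps)%R -> exists delta, (0 < delta)%R /\
     forall y, (Cmod y <= r0)%R -> (Cmod (y - z) < delta)%R -> (Rabs (V y - V z) < eps)%R) ->
  exists zs, (Cmod zs <= r0)%R /\ forall z, (Cmod z <= r0)%R -> (V z <= V zs)%R.
Proof.
intros Hr0 HV.
set (W := fun r t => V (Cpolar (clamp r0 r) t)).
assert (Hcm : forall r t, (Cmod (Cpolar (clamp r0 r) t) <= r0)%R).
{ intros r t. rewrite Cmod_Cpolar by (apply clamp_bounds; auto). apply clamp_bounds; auto. }
destruct (max_in_param_continuous W 0 (2 * PI)) as [tm [Htm Hmc]].
{ pose proof PI_RGT_0. lra. }
{ intros r t eps He. destruct (HV _ (Hcm r t) eps He) as [d [Hd Hy]].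
  exists (d / (2 + 2 * r0 + 1))%R. split. apply Rdiv_lt_0_compat; lra.
  intros r' t' H1 H2. apply Hy. apply Hcm.
  eapply Rle_lt_trans. apply Cpolar_diff.
  pose proof (clamp_lipschitz r0 r' r Hr0). pose proof (clamp_bounds r0 r Hr0).
  rewrite (Rabs_right (clamp r0 r)) by lra.
  pose proof (Rabs_pos (t' - t)). pose proof (Rabs_pos (r' - r)).
  assert (E : (d = (2 + 2 * r0 + 1) * (d / (2 + 2 * r0 + 1)))%R) by (field; lra).
  set (q := (d / (2 + 2 * r0 + 1))%R) in *. nra. }
destruct (continuity_ab_maj (fun r => W r (tm r)) 0 r0 Hr0 (fun c _ => Hmc c)) as [rs [Hrs1 Hrs2]].
exists (Cpolar (clamp r0 rs) (tm rs)). split. apply Hcm.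
intros z Hz. destruct (polar_form z) as [t [Ht Ez]].
replace (V z) with (W (Cmod z) t)
  by (unfold W; rewrite clamp_id by (split; [apply Cmod_ge_0|auto]); rewrite <- Ez; reflexivity).
apply Rle_trans with (W (Cmod z) (tm (Cmod z))). apply (proj2 (Htm _)); auto.
apply (Hrs1 (Cmod z)). split; auto. apply Cmod_ge_0.
Qed.

Lemma disk_neighbourhood (P : C -> Prop) r0 : (0 <= r0)%R ->
  (forall z, (Cmod z <= r0)%R -> exists delta, (0 < delta)%R /\
     forall y, (Cmod (y - z) < delta)%R -> P y) ->
  exists d, (0 < d)%R /\ forall z, (Cmod z < r0 + d)%R -> P z.
Proof.
intros Hr0 HP.
set (k := (2 + 2 * r0)%R).
assert (Hgau : forall t, exists d : posreal, forall y, (Cmod (y - Cpolar r0 t) < k * d)%R -> P y).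
{ intros t. destruct (HP (Cpolar r0 t)) as [d [Hd Hy]]. rewrite Cmod_Cpolar; lra.
  exists (mkposreal (d / k) ltac:(unfold k; apply Rdiv_lt_0_compat; lra)). simpl.
  intros y Hy'. apply Hy. replace (k * (d / k))%R with d in Hy' by (unfold k; field; lra). lra. }
destruct (choice _ Hgau) as [G HG].
destruct (compactness_value_1d 0 (2 * PI) G) as [d Hdc].
pose proof (cond_pos d) as Hdpos.
exists (d / 2)%R. split. lra.
intros z Hz. destruct (Rle_dec (Cmod z) r0) as [Hle|Hgt].
{ destruct (HP z Hle) as [e [He Hy]]. apply Hy. replace (z - z) with (RtoC 0) by ring. rewrite Cmod_0. lra. }
destruct (polar_form z) as [t [Ht Ez]].
specialize (Hdc t Ht). apply NNPP. intro Hn. apply Hdc. intros [t' [Ht' [Htt Hdt]]]. apply Hn.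
apply (HG t'). rewrite Ez. eapply Rle_lt_trans. apply Cpolar_diff.
rewrite (Rabs_right r0) by lra. rewrite Rabs_right by lra.
pose proof (cond_pos (G t')). pose proof (Rabs_pos (t - t')).
assert (r0 * Rabs (t - t') <= r0 * G t')%R by (apply Rmult_le_compat_l; lra).
unfold k. lra.
Qed.

Lemma Cnorm2_continuous (b : C) eps : (0 < eps)%R -> exists eta, (0 < eta)%R /\
  forall a, (Cmod (a - b) < eta -> Rabs (Cnorm2 a - Cnorm2 b) < eps)%R.
Proof.
intros He.
set (K := (2 * Cmod b + 1)%R). assert (HK : (0 < K)%R) by (unfold K; pose proof (Cmod_ge_0 b); lra).
exists (Rmin 1 (eps / K)). split. apply Rmin_pos; [lra|apply Rdiv_lt_0_compat; lra].
intros a Ha.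
assert (H1 : (Cmod (a - b) < 1)%R) by (eapply Rlt_le_trans; [exact Ha|apply Rmin_l]).
assert (H2 : (Cmod (a - b) * K < eps)%R).
{ replace eps with (eps / K * K)%R by (field; lra). apply Rmult_lt_compat_r; auto.
  eapply Rlt_le_trans; [exact Ha|apply Rmin_r]. }
rewrite !Cnorm2_Cmod.
pose proof (Cmod_triangle_inv a b) as H.
pose proof (Cmod_ge_0 a). pose proof (Cmod_ge_0 b). pose proof (Cmod_ge_0 (a - b)).
replace (Cmod a * Cmod a - Cmod b * Cmod b)%R with ((Cmod a - Cmod b) * (Cmod a + Cmod b))%R by ring.
rewrite Rabs_mult, (Rabs_right (Cmod a + Cmod b)) by lra.
assert (Cmod a + Cmod b <= K)%R by (apply Rabs_le_between' in H; unfold K; lra).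
pose proof (Rabs_pos (Cmod a - Cmod b)).
apply Rle_lt_trans with (Cmod (a - b) * K)%R; auto.
apply Rmult_le_compat; lra.
Qed.

Lemma perturbed_norm2_continuous (g : C -> C) l eps q z : (0 <= eps)%R -> cderiv g z l ->
  forall eta, (0 < eta)%R -> exists delta, (0 < delta)%R /\ forall y, (Cmod (y - z) < delta)%R ->
    (Rabs (perturbed_norm2 g eps q y - perturbed_norm2 g eps q z) < eta)%R.
Proof.
intros He Hl eta Heta.
destruct (Cnorm2_continuous (g z) (eta / 2) ltac:(lra)) as [e1 [He1 N1]].
destruct (Cnorm2_continuous (z - q) (eta / 2 / (eps + 1)) ltac:(apply Rdiv_lt_0_compat; lra)) as [e2 [He2 N2]].
destruct (cderiv_continuous g z l Hl e1 He1) as [d1 [Hd1 C1]].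
exists (Rmin d1 e2). split. apply Rmin_pos; auto. intros y Hyz.
assert (A1 : (Rabs (Cnorm2 (g y) - Cnorm2 (g z)) < eta / 2)%R)
  by (apply N1, C1; eapply Rlt_le_trans; [exact Hyz|apply Rmin_l]).
assert (A2 : (Rabs (Cnorm2 (y - q) - Cnorm2 (z - q)) < eta / 2 / (eps + 1))%R).
{ apply N2. replace (y - q - (z - q)) with (y - z) by ring. eapply Rlt_le_trans; [exact Hyz|apply Rmin_r]. }
unfold perturbed_norm2.
replace (Cnorm2 (g y) + eps * Cnorm2 (y - q) - (Cnorm2 (g z) + eps * Cnorm2 (z - q)))%R with
  ((Cnorm2 (g y) - Cnorm2 (g z)) + eps * (Cnorm2 (y - q) - Cnorm2 (z - q)))%R by ring.
eapply Rle_lt_trans. apply Rabs_triang. rewrite Rabs_mult, (Rabs_right eps) by lra.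
assert (eps * Rabs (Cnorm2 (y - q) - Cnorm2 (z - q)) <= eta / 2)%R.
{ apply Rle_trans with ((eps + 1) * (eta / 2 / (eps + 1)))%R.
  apply Rmult_le_compat; try lra. apply Rabs_pos. right; field; lra. }
lra.
Qed.

(* Along the two lines through [zs] in the directions [1] and [i], the second
   derivatives of [|g|^2] add up to [4 |g'(zs)|^2 >= 0] (subharmonicity), so
   the perturbation [eps |z - q|^2] cannot have a local maximum. *)
Lemma perturbed_no_local_max (g g1 : C -> C) g2 zs q eps delta :
  (0 < eps)%R -> (0 < delta)%R ->
  (forall y, (Cmod (y - zs) < delta)%R -> cderiv g y (g1 y)) -> cderiv g1 zs g2 ->
  ~ (forall y, (Cmod (y - zs) < delta)%R ->
       (perturbed_norm2 g eps q y <= perturbed_norm2 g eps q zs)%R).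
Proof.
intros He Hd Hg Hg1 Hmax.
assert (Hin : forall b s, Cmod b = 1%R -> (Rabs (s - 0) < delta)%R -> (Cmod (line zs b s - zs) < delta)%R).
{ intros b s Hb Hs. rewrite Cmod_line, Hb, Rmult_1_r. rewrite Rminus_0_r in Hs. exact Hs. }
assert (Dir : forall b, Cmod b = 1%R ->
  ((Cdot (g zs) (g2 * b * b + g1 zs * 0) + Cnorm2 (g1 zs * b)) + eps * (Cdot (zs - q) 0 + Cnorm2 b) <= 0)%R).
{ intros b Hb.
  destruct (curve_max_second_order (line zs b) (fun _ => b) 0 g g1 g2 0 q eps delta Hd) as [_ CM].
  - intros s _. apply rderiv_line.
  - apply rderiv_const.
  - intros s Hs. apply Hg, Hin; auto.
  - rewrite line_0. exact Hg1.
  - intros s Hs. rewrite line_0. apply Hmax, Hin; auto.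
  - rewrite line_0 in CM. exact CM. }
pose proof (Dir 1 Cmod_1) as R1. pose proof (Dir Ci Cmod_Ci) as R2.
revert R1 R2. unfold Cnorm2, Cdot, Ci.
destruct (g zs) as [u1 u2], g2 as [v1 v2], (g1 zs) as [x1 x2], (zs - q) as [y1 y2]. simpl.
intros R1 R2. ring_simplify in R1. ring_simplify in R2. nra.
Qed.

(* At a point where [g] is only known to be differentiable, a suitable choice
   of the side of [q] makes the first-order condition fail. *)
Lemma perturbed_no_local_max_first_order (g : C -> C) l zs q eps delta :
  (0 < eps)%R -> (0 < delta)%R -> cderiv g zs l ->
  Re (zs - q) <> 0%R -> (0 <= Cdot (g zs) l * Re (zs - q))%R ->
  ~ (forall y, (Cmod (y - zs) < delta)%R ->
       (perturbed_norm2 g eps q y <= perturbed_norm2 g eps q zs)%R).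
Proof.
intros He Hd Hg Hq Hsign Hmax.
pose proof (curve_max_first_order (line zs 1) 1 g l 0 q eps delta Hd (rderiv_line zs 1 0)) as CM.
rewrite line_0 in CM.
assert (E : (Cdot (g zs) l + eps * Re (zs - q) = 0)%R).
{ rewrite <- (Cmult_1_r l) at 1.
  replace (Re (zs - q)) with (Cdot (zs - q) 1) by (unfold Cdot; simpl; ring).
  apply CM; auto. intros s Hs. apply Hmax.
  rewrite Cmod_line, Cmod_1, Rmult_1_r. rewrite Rminus_0_r in Hs. exact Hs. }
assert (0 < Re (zs - q) * Re (zs - q))%R by (apply Rsqr_pos_lt in Hq; exact Hq).
assert (Cdot (g zs) l * Re (zs - q) = - eps * (Re (zs - q) * Re (zs - q)))%R.
{ replace (Cdot (g zs) l)%R with (- eps * Re (zs - q))%R by lra. ring. }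
nra.
Qed.

Lemma perturbed_max_on_circle (g g1 : C -> C) r0 eps : (0 < r0)%R -> (0 < eps)%R ->
  (forall z, (Cmod z <= r0)%R -> cderiv g z (g1 z)) ->
  (forall z, (Cmod z <= r0)%R -> z <> 0 -> exists l, cderiv g1 z l) ->
  exists q zs, Cmod q = 1%R /\ Cmod zs = r0 /\
    forall z, (Cmod z <= r0)%R -> (perturbed_norm2 g eps q z <= perturbed_norm2 g eps q zs)%R.
Proof.
intros Hr He Hg Hg1.
set (q := if Rle_dec (Cdot (g 0) (g1 0)) 0 then RtoC 1 else RtoC (-1)).
destruct (closed_disk_max (perturbed_norm2 g eps q) r0 ltac:(lra)) as [zs [Hzs Hmax]].
{ intros z Hz eta Heta.
  destruct (perturbed_norm2_continuous g (g1 z) eps q z ltac:(lra) (Hg z Hz) eta Heta) as [d [Hd H]].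
  exists d. split; auto. }
exists q, zs. split; [|split]; auto.
{ unfold q. destruct (Rle_dec _ _); rewrite Cmod_R; unfold Rabs; destruct Rcase_abs; lra. }
destruct (Rle_lt_or_eq_dec _ _ Hzs) as [Hlt|Heq]; auto. exfalso.
destruct (Ceq_dec zs 0) as [->|Hz0].
- apply (perturbed_no_local_max_first_order g (g1 0) 0 q eps r0 He Hr (Hg 0 ltac:(lra))).
  + unfold q. destruct (Rle_dec _ _); simpl; lra.
  + unfold q. destruct (Rle_dec _ _); simpl; nra.
  + intros y Hy. apply Hmax. replace (y - 0) with y in Hy by ring. lra.
- pose proof (proj1 (Cmod_gt_0 zs) Hz0) as Hzpos.
  pose proof (Rmin_l (r0 - Cmod zs) (Cmod zs)). pose proof (Rmin_r (r0 - Cmod zs) (Cmod zs)).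
  set (delta := Rmin (r0 - Cmod zs) (Cmod zs)) in *.
  assert (Hball : forall y, (Cmod (y - zs) < delta)%R -> (Cmod y <= r0)%R /\ y <> 0).
  { intros y Hy. pose proof (Cmod_triangle_inv y zs). apply Rabs_le_between' in H1. split. lra.
    intros ->. rewrite Cmod_0 in H1. lra. }
  destruct (Hg1 zs Hzs Hz0) as [g2 Hg2].
  apply (perturbed_no_local_max g g1 g2 zs q eps delta He ltac:(apply Rmin_pos; lra)); auto.
  + intros y Hy. apply Hg, Hball; auto.
  + intros y Hy. apply Hmax, Hball; auto.
Qed.

Lemma max_modulus_closed_disk (g g1 : C -> C) r0 M : (0 < r0)%R ->
  (forall z, (Cmod z <= r0)%R -> cderiv g z (g1 z)) ->
  (forall z, (Cmod z <= r0)%R -> z <> 0 -> exists l, cderiv g1 z l) ->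
  (forall z, Cmod z = r0 -> (Cmod (g z) <= M)%R) ->
  forall z, (Cmod z <= r0)%R -> (Cmod (g z) <= M)%R.
Proof.
intros Hr Hg Hg1 HM z Hz.
assert (HM0 : (0 <= M)%R).
{ pose proof (HM (Cpolar r0 0) (Cmod_Cpolar r0 0 ltac:(lra))). pose proof (Cmod_ge_0 (g (Cpolar r0 0))). lra. }
apply Rnot_lt_le. intro Hc.
set (K := ((r0 + 1) * (r0 + 1))%R). assert (HK : (0 < K)%R) by (unfold K; nra).
set (eps := ((Cnorm2 (g z) - M * M) / (2 * K))%R).
assert (Hgz : (M * M < Cnorm2 (g z))%R) by (rewrite Cnorm2_Cmod; nra).
assert (He : (0 < eps)%R) by (unfold eps; apply Rdiv_lt_0_compat; lra).
destruct (perturbed_max_on_circle g g1 r0 eps Hr He Hg Hg1) as [q [zs [Hq [Hzs Hmax]]]].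
specialize (Hmax z Hz). unfold perturbed_norm2 in Hmax.
assert (Hgzs : (Cnorm2 (g zs) <= M * M)%R).
{ rewrite Cnorm2_Cmod. pose proof (HM zs Hzs). pose proof (Cmod_ge_0 (g zs)). nra. }
assert (Hzsq : (Cnorm2 (zs - q) <= K)%R).
{ rewrite Cnorm2_Cmod. pose proof (Cmod_triangle zs (- q)). rewrite Cmod_opp, Hq, Hzs in H.
  pose proof (Cmod_ge_0 (zs - q)). unfold K. replace (zs + - q) with (zs - q) in H by ring. nra. }
assert (0 <= eps * Cnorm2 (z - q))%R
  by (apply Rmult_le_pos; [lra|]; rewrite Cnorm2_Cmod; pose proof (Cmod_ge_0 (z - q)); nra).
assert (eps * Cnorm2 (zs - q) <= eps * K)%R by (apply Rmult_le_compat_l; lra).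
assert (eps * K = (Cnorm2 (g z) - M * M) / 2)%R by (unfold eps; field; lra).
lra.
Qed.

Definition divz (w : C -> C) (d0 z : C) : C := if Ceq_dec z 0 then d0 else w z / z.

Lemma taylor2_remainder (w w1 : C -> C) (a : C) rho : (0 < rho)%R ->
  (forall y, (Cmod y < rho)%R -> cderiv w y (w1 y)) -> cderiv w1 0 a -> w 0 = 0 ->
  forall eps, (0 < eps)%R -> exists delta, (0 < delta)%R /\ forall z, (Cmod z < delta)%R ->
    (Cmod (w z - w1 0 * z - a / 2 * (z * z)) <= eps * (Cmod z * Cmod z))%R.
Proof.
intros Hr Hw Hw1 Hw0 eps Heps.
destruct (proj1 (cderiv_eps w1 0 a) Hw1 (mkposreal (eps / 2) ltac:(lra))) as [d1 Hd1]. simpl in Hd1.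
exists (Rmin d1 rho). split. { apply Rmin_pos; [apply cond_pos|lra]. }
intros z Hz.
assert (Hz1 : (Cmod z < d1)%R) by (eapply Rlt_le_trans; [exact Hz|apply Rmin_l]).
assert (Hz2 : (Cmod z < rho)%R) by (eapply Rlt_le_trans; [exact Hz|apply Rmin_r]).
(* mean value inequality for the remainder [e] along the segment [[0, z]] *)
set (e := fun y => w y - w1 0 * y - a / 2 * (y * y)).
set (e' := fun s : R => (w1 (RtoC s * z) - w1 0 - a * (RtoC s * z)) * z).
assert (Hseg : forall s, (0 <= s <= 1)%R -> (Cmod (RtoC s * z) <= Cmod z)%R).
{ intros s Hs. rewrite Cmod_mult, Cmod_R, Rabs_right by lra. pose proof (Cmod_ge_0 z). nra. }
assert (He : forall s, (0 <= s <= 1)%R -> rderiv (fun s => e (line 0 z s)) s (e' s)).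
{ intros s Hs. unfold e'. apply rderiv_comp; [|apply rderiv_line].
  unfold e, line. rewrite Cplus_0_l.
  apply cderiv_eq with (w1 (RtoC s * z) - w1 0 * 1 - (a / 2 * (1 * (RtoC s * z) + (RtoC s * z) * 1))).
  field. apply cderiv_minus. apply cderiv_minus.
  - apply Hw. pose proof (Hseg s Hs). lra.
  - apply (cderiv_scal (w1 0) (fun y => y)), cderiv_id.
  - apply (cderiv_scal (a / 2) (fun y => y * y)), (cderiv_mult (fun y => y) (fun y => y)); apply cderiv_id. }
assert (Hbd : forall s, (0 <= s <= 1)%R -> (Cmod (e' s) <= eps / 2 * (Cmod z * Cmod z))%R).
{ intros s Hs. unfold e'. rewrite Cmod_mult. pose proof (Hseg s Hs).
  specialize (Hd1 (RtoC s * z) ltac:(replace (RtoC s * z - 0) with (RtoC s * z) by ring; lra)).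
  replace (RtoC s * z - 0) with (RtoC s * z) in Hd1 by ring.
  replace (w1 (RtoC s * z) - w1 0 - a * (RtoC s * z)) with (w1 (RtoC s * z) - w1 0 - s * z * a) by ring.
  pose proof (Cmod_ge_0 z).
  apply Rle_trans with (eps / 2 * Cmod (RtoC s * z) * Cmod z)%R. apply Rmult_le_compat_r; auto.
  rewrite Rmult_assoc. apply Rmult_le_compat_l. lra. apply Rmult_le_compat_r; auto. }
pose proof (rderiv_mean_value (fun s => e (line 0 z s)) e' _ He Hbd) as Hez.
cbv beta in Hez.
replace (line 0 z 1) with z in Hez by (unfold line; ring).
replace (line 0 z 0) with (RtoC 0) in Hez by (unfold line; ring).
replace (e 0) with (RtoC 0) in Hez by (unfold e; rewrite Hw0; ring).
replace (e z - 0) with (e z) in Hez by ring.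
unfold e in Hez. lra.
Qed.

Lemma cderiv_divz_0 (w w1 : C -> C) (a : C) rho : (0 < rho)%R ->
  (forall y, (Cmod y < rho)%R -> cderiv w y (w1 y)) -> cderiv w1 0 a -> w 0 = 0 ->
  cderiv (divz w (w1 0)) 0 (a / 2).
Proof.
intros Hr Hw Hw1 Hw0. apply cderiv_eps. intros eps.
destruct (taylor2_remainder w w1 a rho Hr Hw Hw1 Hw0 eps (cond_pos eps)) as [d [Hd Hrem]].
exists (mkposreal d Hd). simpl. intros z Hz.
replace (z - 0) with z in * by ring.
unfold divz. destruct (Ceq_dec 0 0) as [_|C0]; [|exfalso; apply C0; reflexivity].
destruct (Ceq_dec z 0) as [->|Hz0].
{ replace (w1 0 - w1 0 - 0 * (a / 2)) with (RtoC 0) by ring. rewrite !Cmod_0. lra. }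
specialize (Hrem z Hz).
replace (w z / z - w1 0 - z * (a / 2)) with ((w z - w1 0 * z - a / 2 * (z * z)) / z) by (field; auto).
pose proof (proj1 (Cmod_gt_0 z) Hz0).
rewrite Cmod_div by auto.
apply Rmult_le_reg_r with (Cmod z). auto.
unfold Rdiv. rewrite Rmult_assoc, Rinv_l by lra. nra.
Qed.

Definition divz_deriv (w w1 w2 : C -> C) (z : C) : C :=
  if Ceq_dec z 0 then w2 0 / 2 else w1 z * / z + w z * - / (z * z).

Lemma nonzero_nbhd (y : C) : y <> 0 ->
  exists delta, (0 < delta)%R /\ forall x, (Cmod (x - y) < delta)%R -> x <> 0.
Proof.
intros Hy. exists (Cmod y). split. apply Cmod_gt_0; auto.
intros x Hx ->. replace (0 - y) with (- y) in Hx by ring. rewrite Cmod_opp in Hx. lra.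
Qed.

Lemma cderiv_divz (w w1 w2 : C -> C) r0 : (0 < r0)%R ->
  (forall z, (Cmod z <= r0)%R -> cderiv w z (w1 z)) ->
  (forall z, (Cmod z <= r0)%R -> cderiv w1 z (w2 z)) -> w 0 = 0 ->
  forall z, (Cmod z <= r0)%R -> cderiv (divz w (w1 0)) z (divz_deriv w w1 w2 z).
Proof.
intros Hr Hw Hw1 Hw0 z Hz. unfold divz_deriv. destruct (Ceq_dec z 0) as [->|Hz0].
- apply (cderiv_divz_0 w w1 (w2 0) r0 Hr); [intros x Hx; apply Hw; lra | | exact Hw0].
  apply Hw1. rewrite Cmod_0. lra.
- apply cderiv_local with (fun y => w y * / y).
  + destruct (nonzero_nbhd z Hz0) as [d [Hd Hx]]. exists d. split; auto.
    intros x Hxz. unfold divz. destruct (Ceq_dec x 0) as [E|_]; [exfalso; eapply Hx; eauto|reflexivity].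
  + apply cderiv_mult. apply Hw; auto. apply cderiv_inv; auto.
Qed.

Lemma divz_deriv_differentiable (w w1 w2 : C -> C) r0 :
  (forall z, (Cmod z <= r0)%R -> cderiv w z (w1 z)) ->
  (forall z, (Cmod z <= r0)%R -> cderiv w1 z (w2 z)) ->
  forall z, (Cmod z <= r0)%R -> z <> 0 -> exists l, cderiv (divz_deriv w w1 w2) z l.
Proof.
intros Hw Hw1 z Hz Hz0. eexists. apply cderiv_local with (fun y => w1 y * / y + w y * - / (y * y)).
- destruct (nonzero_nbhd z Hz0) as [d [Hd Hx]]. exists d. split; auto.
  intros x Hxz. unfold divz_deriv. destruct (Ceq_dec x 0) as [E|_]; [exfalso; eapply Hx; eauto|reflexivity].
- apply cderiv_plus. apply cderiv_mult. apply Hw1; auto. apply cderiv_inv; auto.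
  apply cderiv_mult. apply Hw; auto.
  apply cderiv_ext with (fun y => (-1) * (/ (y * y))). intros; ring.
  apply cderiv_scal. apply (cderiv_comp (fun u => / u) (fun y => y * y)).
  apply cderiv_inv. apply Cmult_neq_0; auto.
  apply cderiv_mult; apply cderiv_id.
Qed.

Lemma schwarz_lemma (w w1 w2 : C -> C) r0 : (0 < r0)%R ->
  (forall z, (Cmod z <= r0)%R -> cderiv w z (w1 z)) ->
  (forall z, (Cmod z <= r0)%R -> cderiv w1 z (w2 z)) ->
  w 0 = 0 ->
  (forall z, (Cmod z <= r0)%R -> (Cmod (w z) <= 1)%R) ->
  forall z, (Cmod z <= r0)%R -> (Cmod (w z) * r0 <= Cmod z)%R.
Proof.
intros Hr Hw Hw1 Hw0 Hb.
assert (Hcirc : forall z, Cmod z = r0 -> (Cmod (divz w (w1 0) z) <= / r0)%R).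
{ intros z Hz. unfold divz. destruct (Ceq_dec z 0) as [->|Hz0].
  { rewrite Cmod_0 in Hz. lra. }
  rewrite Cmod_div, Hz by auto. unfold Rdiv. rewrite <- (Rmult_1_l (/ r0)) at 2.
  apply Rmult_le_compat_r. left; apply Rinv_0_lt_compat; lra. apply Hb. lra. }
intros z Hz.
destruct (Ceq_dec z 0) as [->|Hz0]. { rewrite Hw0, Cmod_0. lra. }
pose proof (max_modulus_closed_disk (divz w (w1 0)) (divz_deriv w w1 w2) r0 (/ r0) Hr
  (cderiv_divz w w1 w2 r0 Hr Hw Hw1 Hw0) (divz_deriv_differentiable w w1 w2 r0 Hw Hw1) Hcirc z Hz) as Hgz.
unfold divz in Hgz. destruct (Ceq_dec z 0) as [E|_]; [contradiction|].
rewrite Cmod_div in Hgz by auto.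
pose proof (proj1 (Cmod_gt_0 z) Hz0).
apply (Rmult_le_compat_r (Cmod z * r0)) in Hgz; [|nra].
replace (Cmod (w z) / Cmod z * (Cmod z * r0))%R with (Cmod (w z) * r0)%R in Hgz by (field; lra).
replace (/ r0 * (Cmod z * r0))%R with (Cmod z) in Hgz by (field; lra).
exact Hgz.
Qed.

Lemma Csqrt_sqr w : Csqrt w * Csqrt w = w.
Proof.
destruct w as [a b]. unfold Csqrt. simpl.
set (M := Cmod (a, b)).
assert (HM : (Rabs a <= M)%R) by apply (re_le_Cmod (a,b)).
assert (HM2 : (M * M = a * a + b * b)%R) by (unfold M, Cmod; simpl; rewrite sqrt_sqrt; [ring|nra]).
assert (Ha1 : (0 <= (M + a) / 2)%R) by (apply Rabs_le_between in HM; lra).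
assert (Ha2 : (0 <= (M - a) / 2)%R) by (apply Rabs_le_between in HM; lra).
assert (Hp : (sqrt ((M + a) / 2) * sqrt ((M - a) / 2) = Rabs b / 2)%R).
{ rewrite <- sqrt_mult by auto. apply sqrt_lem_1. nra. pose proof (Rabs_pos b); lra.
  replace (Rabs b / 2 * (Rabs b / 2))%R with ((Rabs b * Rabs b) / 4)%R by field.
  rewrite <- Rabs_mult, Rabs_right by nra. nra. }
pose proof (sqrt_sqrt _ Ha1). pose proof (sqrt_sqrt _ Ha2).
unfold Cmult; simpl. f_equal; destruct (Rle_dec 0 b).
- nra.
- nra.
- rewrite Rabs_right in Hp by lra. nra.
- rewrite Rabs_left in Hp by lra. nra.
Qed.

Lemma Cmod_add_Csqrt_sub_1_lt (z : C) : (Cmod z < 1)%R ->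
  (Cmod (z + Csqrt (1 + z * z) - 1) < sqrt 2)%R.
Proof.
intros Hz.
set (S := Csqrt (1 + z * z)). set (H := z + S).
assert (HH : H * H - 1 = 2 * H * z).
{ pose proof (Csqrt_sqr (1 + z * z)) as HS. fold S in HS.
  unfold H. transitivity (2 * (z + S) * z + (S * S - (1 + z * z))). ring. rewrite HS. ring. }
assert (HReH : (0 < Re H)%R).
{ destruct z as [a b].
  assert (Hab : (a * a + b * b < 1)%R).
  { pose proof (Cmod2_alt (a, b)). simpl in H0. pose proof (Cmod_ge_0 (a, b)). nra. }
  change (0 < a + sqrt ((Cmod (1 + (a, b) * (a, b)) + Re (1 + (a, b) * (a, b))) / 2))%R.
  set (w := 1 + (a, b) * (a, b)).
  assert (Hw : Re w = (1 + a * a - b * b)%R) by (unfold w; simpl; ring).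
  pose proof (re_le_Cmod w). pose proof (Rle_abs (Re w)).
  destruct (Rle_dec a 0).
  - assert (sqrt (a * a) < sqrt ((Cmod w + Re w) / 2))%R by (apply sqrt_lt_1_alt; split; nra).
    rewrite <- Rsqr_def, sqrt_Rsqr_abs, Rabs_left1 in H2 by lra. lra.
  - pose proof (sqrt_pos ((Cmod w + Re w) / 2)). lra. }
(* [H^2 - 1 = 2 H z] with [|z| < 1] gives [|H^2 - 1| < 2 |H|], i.e. [|H - 1/H| < 2] *)
assert (Hmod : (Cmod (H * H - 1) < 2 * Cmod H)%R).
{ rewrite HH, !Cmod_mult, Cmod_R, Rabs_right by lra.
  assert (0 < Cmod H)%R by (apply Cmod_gt_0; intro E; rewrite E in HReH; simpl in HReH; lra). nra. }
change (Cmod (H - 1) < sqrt 2)%R.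
clearbody H. destruct H as [x y]. simpl in HReH.
assert (Hsq : (Cnorm2 ((x, y) * (x, y) - 1) < 4 * Cnorm2 (x, y))%R).
{ rewrite !Cnorm2_Cmod. pose proof (Cmod_ge_0 ((x, y) * (x, y) - 1)). nra. }
unfold Cnorm2, Cdot in Hsq. simpl in Hsq.
assert (Hk : ((x - 1) * (x - 1) + y * y < 2)%R).
{ set (R2 := (x * x + y * y)%R).
  assert ((R2 - 1) * (R2 - 1) < (2 * x) * (2 * x))%R by (unfold R2; nra).
  assert (R2 - 1 < 2 * x)%R by (destruct (Rle_dec (R2 - 1 + 2 * x) 0); nra).
  unfold R2 in *. nra. }
unfold Cmod. simpl. apply sqrt_lt_1_alt.
pose proof (Rle_0_sqr (x - 1)). pose proof (Rle_0_sqr y). unfold Rsqr in *. split; nra.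
Qed.

(* [u] lies in [exp(D)], the image of the unit disk under the exponential. *)
Definition in_exp_disk (u : C) : Prop := (0 < Re u)%R /\ (Cmod (CLog u) < 1)%R.

Lemma in_exp_disk_open u : in_exp_disk u ->
  exists delta, (0 < delta)%R /\ forall v, (Cmod (v - u) < delta)%R -> in_exp_disk v.
Proof.
intros [H1 H2].
destruct (CLog_continuous u H1 (1 - Cmod (CLog u))%R ltac:(lra)) as [e [He C1]].
exists (Rmin e (Re u)). split. apply Rmin_pos; lra. intros v Hv. split.
- pose proof (re_le_Cmod (v - u)). pose proof (Rmin_r e (Re u)).
  replace (Re (v - u)) with (Re v - Re u)%R in H by (destruct v, u; simpl; ring).
  apply Rabs_le_between in H. lra.
- assert (Cmod (CLog v - CLog u) < 1 - Cmod (CLog u))%R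
    by (apply C1; eapply Rlt_le_trans; [exact Hv|apply Rmin_l]).
  pose proof (Cmod_triangle (CLog u) (CLog v - CLog u)).
  replace (CLog u + (CLog v - CLog u)) with (CLog v) in H0 by ring. lra.
Qed.

Lemma in_exp_disk_Re_lower_bound u : in_exp_disk u -> (exp (-1) * cos 1 <= Re u)%R.
Proof.
intros [H1 H2]. rewrite <- (Cexp_CLog u H1).
pose proof (re_le_Cmod (CLog u)) as Ha. pose proof (im_le_Cmod (CLog u)) as Hb.
destruct (CLog u) as [a b]. rewrite Cexp_pair. simpl in *.
assert (Ha1 : (Rabs a < 1)%R) by lra. apply Rabs_def2 in Ha1.
assert (Hexp : (exp (-1) <= exp a)%R) by (apply Rlt_le, exp_increasing; lra).
pose proof PI2_1.
assert (Hcos : (cos 1 <= cos b)%R).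
{ replace (cos b) with (cos (Rabs b)) by (unfold Rabs; destruct Rcase_abs; [apply cos_neg|reflexivity]).
  apply cos_decr_1; try lra. apply Rabs_pos. }
assert (0 < cos 1)%R by (apply cos_gt_0; lra).
pose proof (exp_pos (-1)).
apply Rmult_le_compat; lra.
Qed.

Lemma in_exp_disk_closure u :
  (forall eta, (0 < eta)%R -> exists v, in_exp_disk v /\ (Cmod (v - u) < eta)%R) ->
  (0 < Re u)%R /\ (Cmod (CLog u) <= 1)%R.
Proof.
intros Happ.
set (c0 := (exp (-1) * cos 1)%R).
assert (Hc0 : (0 < c0)%R)
  by (unfold c0; apply Rmult_lt_0_compat; [apply exp_pos| apply cos_gt_0; pose proof PI2_1; lra]).
assert (HRe : (c0 <= Re u)%R).
{ apply Rnot_lt_le. intro Hc. destruct (Happ (c0 - Re u)%R ltac:(lra)) as [v [Gv Hv]].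
  pose proof (in_exp_disk_Re_lower_bound v Gv). pose proof (re_le_Cmod (v - u)).
  replace (Re (v - u)) with (Re v - Re u)%R in H0 by (destruct v, u; simpl; ring).
  pose proof (Rle_abs (Re v - Re u)). fold c0 in H. lra. }
split. lra.
apply Rnot_lt_le. intro Hc.
destruct (CLog_continuous u ltac:(lra) (Cmod (CLog u) - 1)%R ltac:(lra)) as [e [He Ce]].
destruct (Happ e He) as [v [[_ Gv] Hv]].
specialize (Ce v Hv).
pose proof (Cmod_triangle (CLog v) (- (CLog v - CLog u))).
replace (CLog v + - (CLog v - CLog u)) with (CLog u) in H by ring.
rewrite Cmod_opp in H. lra.
Qed.

Lemma in_exp_disk_preimage_open (p : C -> C) z l : cderiv p z l -> in_exp_disk (p z) ->
  exists delta, (0 < delta)%R /\ forall y, (Cmod (y - z) < delta)%R -> in_exp_disk (p y).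
Proof.
intros Hd Hz.
destruct (in_exp_disk_open (p z) Hz) as [e [He Ho]].
destruct (cderiv_continuous p z l Hd e He) as [d [Hd0 Cd]].
exists d. split; auto.
Qed.

Lemma inner_approx (z : C) d : z <> 0 -> (0 < d)%R ->
  exists y, (Cmod y < Cmod z)%R /\ (Cmod (y - z) < d)%R.
Proof.
intros Hz Hd. pose proof (proj1 (Cmod_gt_0 z) Hz).
set (s := Rmin (d / (2 * Cmod z)) (1/2)).
assert (Hs : (0 < s)%R) by (apply Rmin_pos; [apply Rdiv_lt_0_compat; lra|lra]).
assert (Hs1 : (s <= 1/2)%R) by apply Rmin_r.
assert (Hs2 : (s * Cmod z <= d / 2)%R).
{ replace (d / 2)%R with (d / (2 * Cmod z) * Cmod z)%R by (field; lra).
  apply Rmult_le_compat_r; [lra|apply Rmin_l]. }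
exists (RtoC (1 - s) * z). split.
- rewrite Cmod_mult, Cmod_R, Rabs_right by lra. nra.
- replace (RtoC (1 - s) * z - z) with (- (RtoC s * z)) by (rewrite RtoC_minus; ring).
  rewrite Cmod_opp, Cmod_mult, Cmod_R, Rabs_right by lra. lra.
Qed.

Lemma largest_disk_in (P : C -> Prop) (rho : R) : (0 < rho)%R ->
  (exists d, (0 < d)%R /\ forall z, (Cmod z < d)%R -> P z) ->
  exists r0, (0 < r0 <= rho)%R /\ (forall z, (Cmod z < r0)%R -> P z) /\
    forall d, (0 < d)%R -> (forall z, (Cmod z < r0 + d)%R -> P z) -> (rho < r0 + d)%R.
Proof.
intros Hrho [d0 [Hd0 H0]].
set (E := fun r => (0 <= r <= rho)%R /\ forall z, (Cmod z < r)%R -> P z).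
assert (HE : E (Rmin d0 rho)).
{ split. split. apply Rlt_le, Rmin_pos; lra. apply Rmin_r.
  intros z Hz. apply H0. pose proof (Rmin_l d0 rho). lra. }
assert (HEb : bound E) by (exists rho; intros r [Hr _]; lra).
destruct (completeness E HEb (ex_intro _ _ HE)) as [r0 [Hub Hlub]].
exists r0. split; [split|split].
- pose proof (Hub _ HE). pose proof (Rmin_pos d0 rho). lra.
- apply Hlub. intros r [Hr _]. lra.
- intros z Hz. apply NNPP. intro Hn.
  enough (is_upper_bound E (Cmod z)) by (specialize (Hlub _ H); lra).
  intros r [Hr Hr2]. apply Rnot_lt_le. intro Hlt. apply Hn, Hr2. exact Hlt.
- intros d Hd Hdisk. apply Rnot_le_lt. intro Hle.
  assert (E (r0 + d)%R) by (split; [pose proof (Hub _ HE); pose proof (Rmin_pos d0 rho); lra|exact Hdisk]).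
  pose proof (Hub _ H). lra.
Qed.

Lemma first_exit_circle (p : C -> C) (z1 : C) :
  (forall z, (Cmod z < 1)%R -> exists l, cderiv p z l) ->
  in_exp_disk (p 0) -> (Cmod z1 < 1)%R -> ~ in_exp_disk (p z1) ->
  exists r0 t0, (0 < r0 < 1)%R /\
    (forall z, (Cmod z <= r0)%R -> (0 < Re (p z))%R /\ (Cmod (CLog (p z)) <= 1)%R) /\
    Cmod (CLog (p (Cpolar r0 t0))) = 1%R.
Proof.
intros Hd Hp0 Hz1 Hg1.
assert (Hz10 : (0 < Cmod z1)%R) by (apply Cmod_gt_0; intros ->; contradiction).
destruct (largest_disk_in (fun z => in_exp_disk (p z)) (Cmod z1) Hz10) as [r0 [Hr0 [Hin Hmax]]].
{ destruct (Hd 0 ltac:(rewrite Cmod_0; lra)) as [l0 Hl0].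
  destruct (in_exp_disk_preimage_open p 0 l0 Hl0 Hp0) as [d0 [Hd0 Ho0]].
  exists d0. split; auto. intros z Hz. apply Ho0. replace (z - 0) with z by ring. exact Hz. }
assert (Hcl : forall z, (Cmod z <= r0)%R -> (0 < Re (p z))%R /\ (Cmod (CLog (p z)) <= 1)%R).
{ intros z Hz.
  destruct (Rle_lt_or_eq_dec _ _ Hz) as [Hlt|Heq].
  { destruct (Hin z Hlt). split; lra. }
  destruct (Hd z ltac:(lra)) as [lz Hlz].
  apply in_exp_disk_closure. intros eta Heta.
  destruct (cderiv_continuous p z lz Hlz eta Heta) as [d [Hd' Cd]].
  destruct (inner_approx z d ltac:(intros ->; rewrite Cmod_0 in Heq; lra) Hd') as [y [Hy1 Hy2]].
  exists (p y). split; auto. apply Hin. lra. }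
destruct (classic (exists t0, Cmod (CLog (p (Cpolar r0 t0))) = 1%R)) as [[t0 Ht0]|Hno].
{ exists r0, t0. split. lra. split; auto. }
exfalso.
assert (Hclosed : forall z, (Cmod z <= r0)%R -> in_exp_disk (p z)).
{ intros z Hz. destruct (Hcl z Hz) as [A B]. split; auto.
  destruct (Rle_lt_or_eq_dec _ _ B) as [|Heq]; auto. exfalso. apply Hno.
  destruct (Rle_lt_or_eq_dec _ _ Hz) as [Hlt|Hr].
  - destruct (Hin z Hlt). lra.
  - destruct (polar_form z) as [t [_ Et]]. exists t. rewrite <- Hr, <- Et. exact Heq. }
destruct (disk_neighbourhood (fun y => in_exp_disk (p y)) r0 ltac:(lra)) as [d [Hdpos Hnb]].
{ intros z Hz. destruct (Hd z ltac:(lra)) as [l Hl].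
  apply (in_exp_disk_preimage_open p z l Hl (Hclosed z Hz)). }
exact (Hg1 (Hnb z1 (Hmax d Hdpos Hnb))).
Qed.

Lemma Ci_sqr : Ci * Ci = -1.
Proof. apply injective_projections; simpl; ring. Qed.

Lemma Cnorm2_Ci_mult z : Cnorm2 (Ci * z) = Cnorm2 z.
Proof. unfold Cnorm2, Cdot, Ci. destruct z; simpl. ring. Qed.

Lemma Cdot_scal_r (x y : C) (r : R) : Cdot x (RtoC r * y) = (r * Cdot x y)%R.
Proof. destruct x, y. unfold Cdot, RtoC, Cmult. simpl. ring. Qed.

Lemma real_multiple_of_unit (W A : C) : Cnorm2 W = 1%R -> Cdot W (Ci * A) = 0%R ->
  A = RtoC (Cdot W A) * W.
Proof.
destruct W as [a b], A as [x y]. unfold Cnorm2, Cdot, Ci. simpl. intros HW E.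
assert (HW' : (a * a + b * b = 1)%R) by lra.
assert (E' : (b * x - a * y = 0)%R) by lra.
apply injective_projections; simpl.
- transitivity (x * (a * a + b * b))%R. rewrite HW'; ring.
  transitivity ((a * x + b * y) * a + b * (b * x - a * y))%R. ring. rewrite E'. ring.
- transitivity (y * (a * a + b * b))%R. rewrite HW'; ring.
  transitivity ((a * x + b * y) * b - a * (b * x - a * y))%R. ring. rewrite E'. ring.
Qed.

Lemma jack_circle (w w1 w2 : C -> C) r0 t0 : (0 < r0)%R ->
  (forall z, (Cmod z <= r0)%R -> cderiv w z (w1 z)) ->
  (forall z, (Cmod z <= r0)%R -> cderiv w1 z (w2 z)) ->
  (forall z, (Cmod z <= r0)%R -> (Cmod (w z) <= 1)%R) ->
  Cmod (w (Cpolar r0 t0)) = 1%R ->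
  let z0 := Cpolar r0 t0 in
  Cdot (w z0) (Ci * (z0 * w1 z0)) = 0%R /\
  (Cnorm2 (z0 * w1 z0) <= Cdot (w z0) (z0 * z0 * w2 z0 + z0 * w1 z0))%R.
Proof.
intros Hr Hw Hw1 Hb Hz0 z0. change (Cpolar r0 t0) with z0 in Hz0.
assert (Hcirc : forall s, (Cmod (Cpolar r0 s) <= r0)%R) by (intros s; rewrite Cmod_Cpolar; lra).
destruct (curve_max_second_order (Cpolar r0) (fun s => Ci * Cpolar r0 s) (- Cpolar r0 t0)
            w w1 (w2 z0) t0 0 0 1 Rlt_0_1) as [E1 E2].
- intros s _. apply rderiv_Cpolar.
- apply rderiv_Ci_Cpolar.
- intros s _. apply Hw, Hcirc.
- apply Hw1, Hcirc.
- intros s _. unfold perturbed_norm2. rewrite !Rmult_0_l, !Rplus_0_r, !Cnorm2_Cmod.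
  fold z0. rewrite Hz0. pose proof (Hb _ (Hcirc s)). pose proof (Cmod_ge_0 (w (Cpolar r0 s))). nra.
- fold z0 in E1, E2. rewrite Rmult_0_l, Rplus_0_r in E1, E2. split.
  + rewrite <- E1. f_equal. ring.
  + replace (w2 z0 * (Ci * z0) * (Ci * z0) + w1 z0 * - z0)
      with ((Ci * Ci) * (z0 * z0 * w2 z0) - z0 * w1 z0) in E2 by ring.
    rewrite Ci_sqr in E2.
    replace (-1 * (z0 * z0 * w2 z0) - z0 * w1 z0) with (- (z0 * z0 * w2 z0 + z0 * w1 z0)) in E2 by ring.
    replace (w1 z0 * (Ci * z0)) with (Ci * (z0 * w1 z0)) in E2 by ring.
    rewrite Cnorm2_Ci_mult in E2.
    replace (Cdot (w z0) (- (z0 * z0 * w2 z0 + z0 * w1 z0)))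
      with (- Cdot (w z0) (z0 * z0 * w2 z0 + z0 * w1 z0))%R in E2
      by (unfold Cdot; destruct (w z0), (z0 * z0 * w2 z0 + z0 * w1 z0); simpl; ring).
    lra.
Qed.

(* By the Schwarz lemma [|w(s u)|^2 <= (s/r0)^2] on the radius, with equality at
   [s = r0]; the one-sided derivative at [r0] gives [Re (z0 w'(z0) / w(z0)) >= 1]. *)
Lemma jack_radial (w w1 w2 : C -> C) r0 t0 : (0 < r0)%R ->
  (forall z, (Cmod z <= r0)%R -> cderiv w z (w1 z)) ->
  (forall z, (Cmod z <= r0)%R -> cderiv w1 z (w2 z)) ->
  w 0 = 0 ->
  (forall z, (Cmod z <= r0)%R -> (Cmod (w z) <= 1)%R) ->
  Cmod (w (Cpolar r0 t0)) = 1%R ->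
  (1 <= Cdot (w (Cpolar r0 t0)) (Cpolar r0 t0 * w1 (Cpolar r0 t0)))%R.
Proof.
intros Hr Hw Hw1 Hw0 Hb Hz0.
set (u := Cpolar 1 t0). set (z0 := Cpolar r0 t0) in *.
assert (Hlu : line 0 u r0 = z0) by (unfold line, u, z0, Cpolar, RtoC, Cmult, Cplus; simpl; f_equal; ring).
assert (Hls : forall s, (0 <= s)%R -> Cmod (line 0 u s) = s).
{ intros s Hs. replace (line 0 u s) with (line 0 u s - 0) by ring. rewrite Cmod_line.
  unfold u. rewrite Cmod_Cpolar, Rabs_right by lra. ring. }
set (k := fun s => ((r0 * r0) * Cnorm2 (w (line 0 u s)) - s * s)%R).
assert (Dk : derivable_pt_lim k r0 ((r0 * r0) * (2 * Cdot (w z0) (w1 z0 * u)) - (1 * r0 + r0 * 1))%R).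
{ apply derivable_pt_lim_minus.
  - apply derivable_pt_lim_scal. rewrite <- Hlu.
    apply (Cnorm2_deriv (fun s => w (line 0 u s))). apply rderiv_comp; [|apply rderiv_line].
    apply Hw. rewrite Hls; lra.
  - apply derivable_pt_lim_mult; apply derivable_pt_lim_id. }
assert (Hk : (0 <= (r0 * r0) * (2 * Cdot (w z0) (w1 z0 * u)) - (1 * r0 + r0 * 1))%R).
{ apply (left_max_deriv_ge0 k r0 _ r0 Hr Dk). intros s Hs.
  unfold k. rewrite Hlu, (Cnorm2_Cmod (w z0)), Hz0.
  pose proof (schwarz_lemma w w1 w2 r0 Hr Hw Hw1 Hw0 Hb (line 0 u s) ltac:(rewrite Hls; lra)) as Hsch.
  rewrite Hls in Hsch by lra. rewrite Cnorm2_Cmod. pose proof (Cmod_ge_0 (w (line 0 u s))).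
  assert (0 <= s + Cmod (w (line 0 u s)) * r0)%R by nra. nra. }
replace (z0 * w1 z0) with (RtoC r0 * (w1 z0 * u)) by (rewrite <- Hlu; unfold line; ring).
rewrite Cdot_scal_r. nra.
Qed.

Lemma jack_lemma (w w1 w2 : C -> C) r0 z0 : (0 < r0)%R ->
  (forall z, (Cmod z <= r0)%R -> cderiv w z (w1 z)) ->
  (forall z, (Cmod z <= r0)%R -> cderiv w1 z (w2 z)) ->
  w 0 = 0 ->
  (forall z, (Cmod z <= r0)%R -> (Cmod (w z) <= 1)%R) ->
  Cmod z0 = r0 -> Cmod (w z0) = 1%R ->
  exists m, (1 <= m)%R /\ z0 * w1 z0 = RtoC m * w z0 /\
    (m * (m - 1) <= Cdot (z0 * z0 * w2 z0) (w z0))%R.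
Proof.
intros Hr Hw Hw1 Hw0 Hb Hz0 Hwz0.
destruct (polar_form z0) as [t0 [_ Et0]]. rewrite Hz0 in Et0. subst z0.
destruct (jack_circle w w1 w2 r0 t0 Hr Hw Hw1 Hb Hwz0) as [E1 E2].
pose proof (jack_radial w w1 w2 r0 t0 Hr Hw Hw1 Hw0 Hb Hwz0) as Hm.
set (z0 := Cpolar r0 t0) in *. set (W := w z0) in *.
assert (HW : Cnorm2 W = 1%R) by (rewrite Cnorm2_Cmod, Hwz0; ring).
set (m := Cdot W (z0 * w1 z0)) in *.
assert (Hcol : z0 * w1 z0 = RtoC m * W) by (apply real_multiple_of_unit; auto).
exists m. split; [|split]; auto.
rewrite Hcol, Cnorm2_Cmod, Cmod_mult, Cmod_R, Hwz0 in E2.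
replace (Cdot W (z0 * z0 * w2 z0 + RtoC m * W)) with (Cdot (z0 * z0 * w2 z0) W + m)%R in E2.
- rewrite Rmult_1_r, <- Rabs_mult, Rabs_right in E2 by nra. lra.
- transitivity (Cdot (z0 * z0 * w2 z0) W + m * Cnorm2 W)%R.
  + rewrite HW. ring.
  + unfold Cnorm2, Cdot. destruct W, (z0 * z0 * w2 z0). simpl. ring.
Qed.

Lemma Cdot_le_Cmod (x u : C) : Cmod u = 1%R -> (Cdot x u <= Cmod x)%R.
Proof.
intros Hu. destruct (Rle_dec (Cdot x u) 0) as [h|h]. { pose proof (Cmod_ge_0 x); lra. }
apply Rnot_le_lt in h.
assert (Hu2 : (Re u * Re u + Im u * Im u = 1)%R)
  by (pose proof (Cnorm2_Cmod u) as E; rewrite Hu in E; unfold Cnorm2, Cdot in E; lra).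
rewrite <- (sqrt_Rsqr (Cdot x u)) by lra. unfold Cmod. apply sqrt_le_1_alt.
destruct u as [a b], x as [c d]. unfold Cdot, Rsqr in *. simpl in *.
replace (c * (c * 1) + d * (d * 1))%R with ((a * a + b * b) * (c * c + d * d))%R by (rewrite Hu2; ring).
pose proof (Rle_0_sqr (a * d - b * c)). unfold Rsqr in H. nra.
Qed.

Lemma Cdot_sqr_unit (W : C) : Cmod W = 1%R -> Cdot (W * W) W = Re W.
Proof.
intros HW. pose proof (Cnorm2_Cmod W) as E. rewrite HW in E.
destruct W as [a b]. unfold Cnorm2, Cdot in *. simpl in *.
transitivity (a * (a * a + b * b))%R. ring. rewrite E. ring.
Qed.

(* At the point given by Jack's lemma the left-hand side of the subordination
   has modulus at least [e^(-1) (alpha1 - alpha2) >= sqrt 2]. *)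
Lemma jack_lower_bound (a1 a2 m : R) (W B : C) :
  (a1 - a2 >= sqrt 2 * exp 1)%R -> (0 < a2)%R -> Cmod W = 1%R -> (1 <= m)%R ->
  (m * (m - 1) <= Cdot B W)%R ->
  (sqrt 2 <= Cmod (Cexp W * (RtoC a1 * (RtoC m * W) + RtoC a2 * B
                              + RtoC a2 * ((RtoC m * W) * (RtoC m * W)))))%R.
Proof.
intros Hal Ha2 HW Hm HB.
set (X := RtoC a1 * (RtoC m * W) + RtoC a2 * B + RtoC a2 * ((RtoC m * W) * (RtoC m * W))).
assert (HReW : (-1 <= Re W)%R) by (pose proof (re_le_Cmod W); apply Rabs_le_between in H; lra).
assert (Hpos : (0 < sqrt 2 * exp 1)%R) by (apply Rmult_lt_0_compat; [apply sqrt_lt_R0; lra|apply exp_pos]).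
assert (HX : (a1 - a2 <= Cdot X W)%R).
{ replace (Cdot X W) with (a1 * m + a2 * Cdot B W + a2 * (m * m) * Re W)%R.
  - assert (a2 * (m * (m - 1)) <= a2 * Cdot B W)%R by (apply Rmult_le_compat_l; lra).
    assert (0 <= a2 * (m * m) * (1 + Re W))%R by (repeat apply Rmult_le_pos; nra).
    assert (0 <= (m - 1) * (a1 - a2))%R by (apply Rmult_le_pos; lra).
    nra.
  - assert (HW2 : Cnorm2 W = 1%R) by (rewrite Cnorm2_Cmod, HW; ring).
    transitivity (a1 * m * Cnorm2 W + a2 * Cdot B W + a2 * (m * m) * Cdot (W * W) W)%R.
    + rewrite HW2, (Cdot_sqr_unit W HW). ring.
    + unfold X, Cnorm2, Cdot. destruct W as [a b], B as [x y]. simpl. ring. }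
rewrite Cmod_mult, Cmod_Cexp.
pose proof (Cdot_le_Cmod X W HW).
assert (Hexp : (exp (-1) <= exp (Re W))%R)
  by (destruct (Rle_lt_or_eq_dec _ _ HReW) as [h|h]; [left; apply exp_increasing; auto|right; f_equal; exact h]).
assert (Hee : (exp (-1) * exp 1 = 1)%R) by (rewrite <- exp_plus; replace (-1 + 1)%R with 0%R by ring; apply exp_0).
pose proof (exp_pos (-1)).
apply Rle_trans with (exp (-1) * (sqrt 2 * exp 1))%R.
- replace (exp (-1) * (sqrt 2 * exp 1))%R with (sqrt 2 * (exp (-1) * exp 1))%R by ring. rewrite Hee. lra.
- apply Rmult_le_compat; lra.
Qed.

Lemma in_exp_disk_everywhere (alpha1 alpha2 : R) (p p1 p2 : C -> C) :
  (0 < alpha2)%R -> (alpha1 - alpha2 >= sqrt 2 * exp 1)%R ->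
  (forall z, in_disk z -> cderiv p z (p1 z)) ->
  (forall z, in_disk z -> cderiv p1 z (p2 z)) ->
  p 0 = 1 ->
  (forall z, in_disk z ->
     (Cmod (RtoC alpha1 * z * p1 z + RtoC alpha2 * (z * z) * p2 z) < sqrt 2)%R) ->
  forall z, in_disk z -> in_exp_disk (p z).
Proof.
intros Ha2 Hal Hp Hp1 Hp0 Hbound z1 Hz1. apply NNPP. intro Hz1n.
assert (Hp0d : in_exp_disk (p 0)) by (unfold in_exp_disk; rewrite Hp0, CLog_1, Cmod_0; simpl; lra).
destruct (first_exit_circle p z1 (fun z Hz => ex_intro _ _ (Hp z Hz)) Hp0d Hz1 Hz1n)
  as [r0 [t0 [Hr0 [Hcl Ht0]]]].
assert (Hdisk : forall z, (Cmod z <= r0)%R -> in_disk z) by (intros z Hz; unfold in_disk; lra).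
assert (Hpn : forall z, (Cmod z <= r0)%R -> p z <> 0)
  by (intros z Hz E; pose proof (proj1 (Hcl z Hz)) as H; rewrite E in H; simpl in H; lra).
set (w := fun z => CLog (p z)).
set (w1 := fun z => p1 z * / p z).
set (w2 := fun z => p2 z * / p z + p1 z * (p1 z * - / (p z * p z))).
assert (Hw : forall z, (Cmod z <= r0)%R -> cderiv w z (w1 z)).
{ intros z Hz. apply (cderiv_comp CLog p). apply cderiv_CLog, Hcl; auto. apply Hp, Hdisk; auto. }
assert (Hw1 : forall z, (Cmod z <= r0)%R -> cderiv w1 z (w2 z)).
{ intros z Hz. apply (cderiv_mult p1 (fun z => / p z)). apply Hp1, Hdisk; auto.
  apply (cderiv_comp (fun u => / u) p). apply cderiv_inv; auto. apply Hp, Hdisk; auto. }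
set (z0 := Cpolar r0 t0) in *.
assert (Hz0 : Cmod z0 = r0) by (apply Cmod_Cpolar; lra).
destruct (jack_lemma w w1 w2 r0 z0 ltac:(lra) Hw Hw1) as [m [Hm [Hcol HB]]]; auto.
{ unfold w. rewrite Hp0. apply CLog_1. }
{ intros z Hz. apply Hcl; auto. }
assert (Hpz0 : p z0 = Cexp (w z0)) by (symmetry; apply Cexp_CLog, Hcl; lra).
pose proof (jack_lower_bound alpha1 alpha2 m (w z0) (z0 * z0 * w2 z0) Hal Ha2 Ht0 Hm HB) as Hlow.
rewrite <- Hcol, <- Hpz0 in Hlow.
replace (p z0 * (RtoC alpha1 * (z0 * w1 z0) + RtoC alpha2 * (z0 * z0 * w2 z0)
                  + RtoC alpha2 * (z0 * w1 z0 * (z0 * w1 z0))))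
  with (RtoC alpha1 * z0 * p1 z0 + RtoC alpha2 * (z0 * z0) * p2 z0) in Hlow
  by (unfold w1, w2; field; apply Hpn; lra).
pose proof (Hbound z0 (Hdisk z0 ltac:(lra))). lra.
Qed.

Lemma subord_Cexp_of_in_exp_disk (p p1 : C -> C) :
  (forall z, in_disk z -> cderiv p z (p1 z)) -> p 0 = 1 ->
  (forall z, in_disk z -> in_exp_disk (p z)) -> subord p Cexp.
Proof.
intros Hp Hp0 Hgood.
exists (fun z => CLog (p z)). split; [|split; [|split]].
- intros z Hz. exists (p1 z * / p z). apply (cderiv_comp CLog p).
  apply cderiv_CLog, Hgood; auto. apply Hp; auto.
- rewrite Hp0. apply CLog_1.
- intros z Hz. apply Hgood; auto.
- intros z Hz. symmetry. apply Cexp_CLog, Hgood; auto.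
Qed.

Theorem theorem4p6 (alpha1 alpha2 : R) (p p1 p2 : C -> C) :
  (0 < alpha1)%R -> (0 < alpha2)%R ->
  (alpha1 - alpha2 >= sqrt 2 * exp 1)%R ->
  (forall z, in_disk z -> cderiv p z (p1 z)) ->
  (forall z, in_disk z -> cderiv p1 z (p2 z)) ->
  p 0 = 1 ->
  subord (fun z => 1 + RtoC alpha1 * z * p1 z + RtoC alpha2 * (z * z) * p2 z)
         (fun z => z + Csqrt (1 + z * z)) ->
  subord p Cexp.
Proof.
(* [0 < alpha1] follows from the other two hypotheses on [alpha1, alpha2]. *)
intros _ Ha2 Hal Hp Hp1 Hp0 [om [_ [_ [Hom Hpsi]]]].
apply (subord_Cexp_of_in_exp_disk p p1 Hp Hp0).
apply (in_exp_disk_everywhere alpha1 alpha2 p p1 p2 Ha2 Hal Hp Hp1 Hp0).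
intros z Hz.
replace (RtoC alpha1 * z * p1 z + RtoC alpha2 * (z * z) * p2 z)
  with (1 + RtoC alpha1 * z * p1 z + RtoC alpha2 * (z * z) * p2 z - 1) by ring.
rewrite (Hpsi z Hz). apply Cmod_add_Csqrt_sub_1_lt, Hom, Hz.
Qed.
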